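(* Nominal equivalence $\equiv_\star$ is an equivalence relation. When restricted to state terms of $\mathcal{R}^{\mathrm{dml}}_{\Sigma,\mathcal{D}}(Q)$ satisfying the freshness condition, it is a bisimulation on $\mathcal{R}^{\mathrm{dml}}_{\Sigma,\mathcal{D}}(Q)$, for every DML query $Q$: if $t_1\equiv_\star t_2$ and $t_1\to t_1'$ then $t_2\to t_2'$ for some $t_2'\equiv_\star t_1'$, and symmetrically.
   Context: Setting. Order-sorted signature $\Sigma$ with sorts $\mathsf{Fact}$, $\mathsf{Bool}$ interpreted in an algebra $\mathcal{D}$ presented by structural axioms $A$ and confluent terminating equations with Boolean connectives and Boolean-valued equality; ground $\mathsf{Bool}$ terms reduce to $\mathsf{true}$/$\mathsf{false}$. Multisets of facts: associative commutative $\circ$ with identity $\emptyset$. Nominal sorts $s$ (values carry no algebraic or relational structure besides equality) have values $\iota^s_n$ ($n\in\mathbb{N}$); for each nominal sort a fresh-fact constructor $C_s$, and $\upsilon(C_{s_1}(\iota^{s_1}_{m_1})\circ\cdots\circ C_{s_n}(\iota^{s_n}_{m_n}))=C_{s_1}(\iota^{s_1}_{m_1+1})\circ\cdots\circ C_{s_n}(\iota^{s_n}_{m_n+1})$. Patterns: $\circ$-combinations of $[F]_!$, $[F]_?$, $[F]_0$ (multisets of possibly non-ground facts) and $[G]_\star$ (fresh facts); $P_!,P_?,P_0,P_\star$ the wrapped multisets. Terminating: $P_?\neq\emptyset$; semi-terminating: $P_?\circ P_0\neq\emptyset$; terminating and preserving: $P_?\neq\emptyset$, $P_0=P_\star=\emptyset$.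 Conditions: $\mathrm{False}$, $\{B\}$, $\neg\psi$, $\psi_1\vee\psi_2$, $\exists P.\psi$ ($P$ terminating and preserving). DML queries: $\emptyset$, $\mathrm{ok}$, facts, $D\oplus D'$, $\varphi\Rightarrow D$, $\mathrm{From}\,P.D$ ($P$ terminating, or $P$ semi-terminating with $D$ success assured: $\mathrm{ok}$, a fact, or $D_1\oplus D_2$ with one side success assured). Condition rules (''$X\mapsto Y$'' meaning $\{F,S\,X\}^c\to\{F,S\,Y\}^c$, $\sigma=\{\vec a/\vec v\}$): $[\vec a]_{\mathrm{False}}\mapsto\mathrm{Res}(\mathsf{false})$; $[\vec a]_{\{B\}}\mapsto\mathrm{Res}(\sigma(B))$; $[\vec a]_{\neg\psi}\mapsto\mathrm{Not}[\vec a]_\psi$; $\mathrm{Not}\,\mathrm{Res}(B)\mapsto\mathrm{Res}(\neg B)$; $[\vec a]_{\psi_1\vee\psi_2}\mapsto[\vec a]^\downarrow_{\psi_1}[\vec a]_{\psi_2}$; $[\vec a]^\downarrow_\psi\mathrm{Res}(\mathsf{true})\mapsto\mathrm{Res}(\mathsf{true})$; $[\vec a]^\downarrow_\psi\mathrm{Res}(\mathsf{false})\mapsto[\vec a]_\psi$; $[\vec a]_{\exists P.\psi}\mapsto[F\mid\vec a]_{\exists P.\psi}$; with $\sigma'=\{\vec a/\vec v,\vec b/\vec w\}$ ($\vec w$ the variables of $P$ not in $\vec v$) and $F'=F''\circ\sigma'(P_!\circ P_?)$: $[F'\mid\vec a]_{\exists P.\psi}\mapsto[F''\circ\sigma'(P_!)\mid\vec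 a]_{\exists P.\psi}[\vec a,\vec b]^{\vec v,\vec w}_\psi$; $[F'\mid\vec a]_{\exists P.\psi}\mathrm{Res}(\mathsf{false})\mapsto[F'\mid\vec a]_{\exists P.\psi}$; $[F'\mid\vec a]_{\exists P.\psi}\mathrm{Res}(\mathsf{true})\mapsto\mathrm{Res}(\mathsf{true})$; if no matching exists, $[F'\mid\vec a]_{\exists P.\psi}\mapsto\mathrm{Res}(\mathsf{false})$. $\mathcal{R}^{\mathrm{dml}}_{\Sigma,\mathcal{D}}(Q)$: states $\{F,F',F_\star,S\}^d$, terminal $\mathrm{New}(G,G_\star)$, $\mathrm{Fail}(G,G_\star)$. With ''$X\mapsto Y$'' meaning $\{F,F',F_\star,S\,X\}^d\to\{F,F',F_\star,S\,Y\}^d$: $\mathrm{Ok}\,\mathrm{Ok}\mapsto\mathrm{Ok}$; $[\vec a]_{\mathrm{ok}}\mapsto\mathrm{Ok}$; $[\vec a]_\emptyset\mapsto$ (nothing); $\{F,F',F_\star,S[\vec a]_f\}^d\to\{F,F'\circ\sigma(f),F_\star,S\,\mathrm{Ok}\}^d$; $[\vec a]_{R_1\oplus R_2}\mapsto[\vec a]^\downarrow_{R_2}[\vec a]_{R_1}$; $[\vec a]^\downarrow_{R_2}\mathrm{Ok}\mapsto\mathrm{Ok}[\vec a]_{R_2}$; $[\vec a]^\downarrow_{R_2}\mapsto[\vec a]_{R_2}$ (top frame); $[\vec a]_{\varphi\Rightarrow R}\mapsto[\vec a\mid[\vec a]^{\vec v}_\varphi]_R$; $[\vec a\mid\mathrm{Res}(\mathsf{false})]_R\mapsto$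 (nothing); $[\vec a\mid\mathrm{Res}(\mathsf{true})]_R\mapsto[\vec a]_R$; for each condition rule $\{F,S'\}^c\to\{F,S''\}^c$, $[\vec a\mid S']_R\mapsto[\vec a\mid S'']_R$; $[\vec a]_{\mathrm{From}\,P.R}\mapsto[F\mid\vec a\mid\mathsf{false}]_{\mathrm{From}\,P.R}$; if $F=G\circ\sigma'(P_!\circ P_?\circ P_0)$, $H=H'\circ\sigma'(P_!\circ P_?\circ P_0)$, $F_\star=K\circ\sigma'(P_\star)$, then $\{F,F',F_\star,S[H\mid\vec a\mid B]_{\mathrm{From}\,P.R}\}^d\to\{G\circ\sigma'(P_!\circ P_?),F',K\circ\upsilon(\sigma'(P_\star)),S[H'\circ\sigma'(P_!)\mid\vec a\mid B,\sigma'(P_0)]_{\mathrm{From}\,P.R}[\vec a,\vec b]^{\vec v,\vec w}_R\}^d$; $\{F,F',F_\star,S[H\mid\vec a\mid B,F_0]_{\mathrm{From}\,P.R}\}^d\to\{F\circ F_0,F',F_\star,S[H\circ F_0\mid\vec a\mid B]_{\mathrm{From}\,P.R}\}^d$; $[H\mid\vec a\mid B,F_0]_{\mathrm{From}\,P.R}\mathrm{Ok}\mapsto[H\mid\vec a\mid\mathsf{true}]_{\mathrm{From}\,P.R}$; if $H$ matches no $H'\circ\sigma'(P_!\circ P_?\circ P_0)$, $[H\mid\vec a\mid B]_{\mathrm{From}\,P.R}\mapsto\delta(B)$ ($\delta(\mathsf{true})=\mathrm{Ok}$, $\delta(\mathsf{false})$ = nothing); $\{F,F',F_\star,\mathrm{Ok}\}^d\to\mathrm{New}(F\circ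 F',F_\star)$; $\{F,F',F_\star,\text{empty}\}^d\to\mathrm{Fail}(F\circ F',F_\star)$. Nominal equivalence: $t_1\equiv_\star t_2$ iff there is a sort-preserving bijection $\alpha:\mathrm{Nom}(t_1)\to\mathrm{Nom}(t_2)$ between the sets of nominal values occurring in them whose extension $\hat\alpha$ (replacing each nominal value $x$ by $\alpha(x)$, leaving other constants and variables fixed, commuting with non-nominal operators) satisfies $\hat\alpha(t_1)=t_2$. Freshness condition: a state term $t$ satisfies it iff $m>n$ whenever $t$ contains a fresh fact $C_s(\iota^s_m)$ at some position and an occurrence of $\iota^s_n$ at a position other than the argument of that fresh fact. *)

From Stdlib Require List.
From Stdlib Require Import Permutation.
From mathcomp Require Import all_boot.

Set Implicit Arguments.
Unset Strict Implicit.
Unset Printing Implicit Defensive.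

(* multiset equality of two lists, up to an element relation r:
   l1 is pointwise r-related to some permutation of l2 *)
Definition mrel (A : Type) (r : A -> A -> Prop) (l1 l2 : seq A) : Prop :=
  exists2 l, Permutation l2 l & List.Forall2 r l1 l.

(* Terms of the signature Sigma.  NS = nominal sorts, Fs = (non-nominal)
   operator symbols; nominal values iota^s_n are TNom s n; variables TVar x. *)
Section Terms.
Variables (NS : eqType) (Fs : Type).

Inductive term : Type :=
| TVar of nat
| TNom of NS & nat
| TOp of Fs & seq term.

Fixpoint ren (a : NS -> nat -> nat) (t : term) : term :=
  match t with
  | TVar x => TVar x
  | TNom s n => TNom s (a s n)
  | TOp f ts => TOp f (map (ren a) ts)
  end.

Fixpoint tnoms (t : term) : seq (NS * nat) :=
  match t with
  | TVar _ => [::]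
  | TNom s n => [:: (s, n)]
  | TOp _ ts => flatten (map tnoms ts)
  end.

Fixpoint tvars (t : term) : seq nat :=
  match t with
  | TVar x => [:: x]
  | TNom _ _ => [::]
  | TOp _ ts => flatten (map tvars ts)
  end.

Fixpoint subst (sg : nat -> term) (t : term) : term :=
  match t with
  | TVar x => sg x
  | TNom s n => TNom s n
  | TOp f ts => TOp f (map (subst sg) ts)
  end.

Definition ground (t : term) : bool := nilp (tvars t).

End Terms.

Arguments TVar {NS Fs} _.
Arguments TNom {NS Fs} _ _.
Arguments TOp {NS Fs} _ _.

(* The data algebra D presented by structural axioms A and equations E.
   aeq  = equality modulo the structural axioms A,
   deq  = equality in D (modulo E u A).
   "Nominal values carry no structure besides equality" is expressed by
   invariance of both equalities under every injective sort-preserving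
   renaming of nominal values, and distinctness of nominal values. *)
Record data_algebra (NS : eqType) (Fs : Type) := DataAlgebra {
  deq : term NS Fs -> term NS Fs -> Prop;
  aeq : term NS Fs -> term NS Fs -> Prop;
  b_true : Fs;
  b_false : Fs;
  b_not : Fs;
  deq_refl : forall t, deq t t;
  deq_sym : forall t u, deq t u -> deq u t;
  deq_trans : forall t u v, deq t u -> deq u v -> deq t v;
  deq_op : forall f ts us, List.Forall2 deq ts us -> deq (TOp f ts) (TOp f us);
  deq_ren : forall a : NS -> nat -> nat, (forall s, injective (a s)) ->
              forall t u, deq (ren a t) (ren a u) <-> deq t u;
  deq_nom : forall s n s' m, deq (TNom s n) (TNom s' m) -> (s, n) = (s', m);
  aeq_refl : forall t, aeq t t;
  aeq_sym : forall t u, aeq t u -> aeq u t;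
  aeq_trans : forall t u v, aeq t u -> aeq u v -> aeq t v;
  aeq_op : forall f ts us, List.Forall2 aeq ts us -> aeq (TOp f ts) (TOp f us);
  aeq_deq : forall t u, aeq t u -> deq t u;
  aeq_subst : forall (sg : nat -> term NS Fs) t u, aeq t u -> aeq (subst sg t) (subst sg u);
  aeq_ren : forall a : NS -> nat -> nat, (forall s, injective (a s)) ->
              forall t u, aeq (ren a t) (ren a u) <-> aeq t u;
  aeq_noms : forall t u, aeq t u -> tnoms t =i tnoms u;
  aeq_vars : forall t u, aeq t u -> tvars t =i tvars u;
  true_neq_false : ~ deq (TOp b_true [::]) (TOp b_false [::]);
  not_true : deq (TOp b_not [:: TOp b_true [::]]) (TOp b_false [::]);
  not_false : deq (TOp b_not [:: TOp b_false [::]]) (TOp b_true [::])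
}.

Section Syntax.
Variables (NS : eqType) (Fs : Type).
Local Notation term := (term NS Fs).

(* P = [P_!]_! o [P_?]_? o [P_0]_0 o [P_star]_star ; a fresh-fact pattern
   C_s(u) is the pair (s, u). *)
Record pattern := Pat {
  p_bang : seq term;
  p_q : seq term;
  p_0 : seq term;
  p_star : seq (NS * term)
}.

Inductive cond :=
| CFalse
| CBool of term
| CNeg of cond
| COr of cond & cond
| CEx of pattern & cond.

Inductive dml :=
| QEmpty
| QOk
| QFact of term
| QPlus of dml & dml
| QImp of cond & dml
| QFrom of pattern & dml.

(* an environment [a]^{v}: the variables v paired with the values a *)
Definition env := seq (nat * term).

Fixpoint lookup (e : env) (x : nat) : term :=
  match e with
  | [::] => TVar x
  | p :: e' => if p.1 == x then p.2 else lookup e' x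
  end.

(* items of condition-evaluation stacks {F, S}^c *)
Inductive citem :=
| CIFrame of env & cond                       (* [a]_psi *)
| CIRes of term
| CINot
| CIOrK of env & cond                         (* [a]^down_psi *)
| CIEx of seq term & env & pattern & cond.    (* [H | a]_{exists P. psi} *)

Inductive ditem :=
| DIFrame of env & dml                        (* [a]_R *)
| DIOk
| DIPlusK of env & dml                        (* [a]^down_R *)
| DICond of env & seq citem & dml             (* [a | S']_R *)
| DIFrom of seq term & env & bool & option (seq term) & pattern & dml.
        (* [H | a | B]_{From P.R}  (None)  /  [H | a | B, F0]_{From P.R} (Some F0) *)

(* state terms: {F, F', F_star, S}^d, New(G, G_star), Fail(G, G_star);
   a fresh fact C_s(iota^s_m) is the pair (s, m); stacks have top at the end *)
Inductive state :=
| St of seq term & seq term & seq (NS * nat) & seq ditem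
| SNew of seq term & seq (NS * nat)
| SFail of seq term & seq (NS * nat).

Definition lren (a : NS -> nat -> nat) (l : seq term) := map (ren a) l.
Definition pren (a : NS -> nat -> nat) (P : pattern) : pattern :=
  Pat (lren a (p_bang P)) (lren a (p_q P)) (lren a (p_0 P))
      (map (fun p => (p.1, ren a p.2)) (p_star P)).
Fixpoint cren (a : NS -> nat -> nat) (c : cond) : cond :=
  match c with
  | CFalse => CFalse
  | CBool B => CBool (ren a B)
  | CNeg c' => CNeg (cren a c')
  | COr c1 c2 => COr (cren a c1) (cren a c2)
  | CEx P c' => CEx (pren a P) (cren a c')
  end.
Fixpoint qren (a : NS -> nat -> nat) (q : dml) : dml :=
  match q with
  | QEmpty => QEmpty
  | QOk => QOk
  | QFact f => QFact (ren a f)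
  | QPlus q1 q2 => QPlus (qren a q1) (qren a q2)
  | QImp c q' => QImp (cren a c) (qren a q')
  | QFrom P q' => QFrom (pren a P) (qren a q')
  end.
Definition eren (a : NS -> nat -> nat) (e : env) : env := map (fun p => (p.1, ren a p.2)) e.
Definition ciren (a : NS -> nat -> nat) (c : citem) : citem :=
  match c with
  | CIFrame e psi => CIFrame (eren a e) (cren a psi)
  | CIRes B => CIRes (ren a B)
  | CINot => CINot
  | CIOrK e psi => CIOrK (eren a e) (cren a psi)
  | CIEx H e P psi => CIEx (lren a H) (eren a e) (pren a P) (cren a psi)
  end.
Definition diren (a : NS -> nat -> nat) (d : ditem) : ditem :=
  match d with
  | DIFrame e R => DIFrame (eren a e) (qren a R)
  | DIOk => DIOk
  | DIPlusK e R => DIPlusK (eren a e) (qren a R)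
  | DICond e cs R => DICond (eren a e) (map (ciren a) cs) (qren a R)
  | DIFrom H e B F0 P R =>
      DIFrom (lren a H) (eren a e) B (omap (lren a) F0) (pren a P) (qren a R)
  end.
Definition fren (a : NS -> nat -> nat) (fs : seq (NS * nat)) := map (fun p => (p.1, a p.1 p.2)) fs.
Definition sren (a : NS -> nat -> nat) (t : state) : state :=
  match t with
  | St F F' Fs Sk => St (lren a F) (lren a F') (fren a Fs) (map (diren a) Sk)
  | SNew G Gs => SNew (lren a G) (fren a Gs)
  | SFail G Gs => SFail (lren a G) (fren a Gs)
  end.

Definition lnoms (l : seq term) := flatten (map (@tnoms _ _) l).
Definition pnoms (P : pattern) :=
  lnoms (p_bang P) ++ lnoms (p_q P) ++ lnoms (p_0 P)
  ++ flatten (map (fun p => tnoms p.2) (p_star P)).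
Fixpoint cnoms (c : cond) :=
  match c with
  | CFalse => [::]
  | CBool B => tnoms B
  | CNeg c' => cnoms c'
  | COr c1 c2 => cnoms c1 ++ cnoms c2
  | CEx P c' => pnoms P ++ cnoms c'
  end.
Fixpoint qnoms (q : dml) :=
  match q with
  | QEmpty => [::]
  | QOk => [::]
  | QFact f => tnoms f
  | QPlus q1 q2 => qnoms q1 ++ qnoms q2
  | QImp c q' => cnoms c ++ qnoms q'
  | QFrom P q' => pnoms P ++ qnoms q'
  end.
Definition enoms (e : env) := flatten (map (fun p => tnoms p.2) e).
Definition cinoms (c : citem) :=
  match c with
  | CIFrame e psi => enoms e ++ cnoms psi
  | CIRes B => tnoms B
  | CINot => [::]
  | CIOrK e psi => enoms e ++ cnoms psi
  | CIEx H e P psi => lnoms H ++ enoms e ++ pnoms P ++ cnoms psi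
  end.
Definition dinoms (d : ditem) :=
  match d with
  | DIFrame e R => enoms e ++ qnoms R
  | DIOk => [::]
  | DIPlusK e R => enoms e ++ qnoms R
  | DICond e cs R => enoms e ++ flatten (map cinoms cs) ++ qnoms R
  | DIFrom H e B F0 P R =>
      lnoms H ++ enoms e ++ (if F0 is Some l then lnoms l else [::]) ++ pnoms P ++ qnoms R
  end.
Definition onoms (t : state) :=
  match t with
  | St F F' _ Sk => lnoms F ++ lnoms F' ++ flatten (map dinoms Sk)
  | SNew G _ => lnoms G
  | SFail G _ => lnoms G
  end.
Definition ffacts (t : state) :=
  match t with
  | St _ _ Fs _ => Fs
  | SNew _ Gs => Gs
  | SFail _ Gs => Gs
  end.
Definition snoms (t : state) := onoms t ++ ffacts t.

Definition fresh_state (t : state) : Prop :=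
  forall x, x \in ffacts t ->
  forall y, y \in onoms t ++ rem x (ffacts t) -> y.1 = x.1 -> y.2 < x.2.

Definition pvars (P : pattern) : seq nat :=
  flatten (map (@tvars _ _) (p_bang P ++ p_q P ++ p_0 P))
  ++ flatten (map (fun p => tvars p.2) (p_star P)).
Definition newvars (P : pattern) (e : env) : seq nat :=
  sort leq (undup [seq x <- pvars P | x \notin map fst e]).
Definition extend (e : env) (P : pattern) (b : nat -> term) : env :=
  e ++ [seq (w, b w) | w <- newvars P e].
Definition bground (e : env) (P : pattern) (b : nat -> term) : bool :=
  all (fun w => ground (b w)) (newvars P e).
Definition inst (e : env) (l : seq term) : seq term := map (subst (lookup e)) l.
Definition upsilon (fs : seq (NS * nat)) := map (fun p => (p.1, p.2.+1)) fs.

End Syntax.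

Arguments CFalse {NS Fs}.
Arguments QEmpty {NS Fs}.
Arguments QOk {NS Fs}.
Arguments CINot {NS Fs}.
Arguments DIOk {NS Fs}.

Section Equality.
Variables (NS : eqType) (Fs : Type) (D : data_algebra NS Fs).
Local Notation term := (term NS Fs).
Local Notation aeq := (aeq D).

Definition lrel (l1 l2 : seq term) := mrel aeq l1 l2.
Definition patrel (P1 P2 : pattern NS Fs) :=
  [/\ lrel (p_bang P1) (p_bang P2), lrel (p_q P1) (p_q P2),
      lrel (p_0 P1) (p_0 P2) &
      mrel (fun p q : NS * term => p.1 = q.1 /\ aeq p.2 q.2) (p_star P1) (p_star P2)].
Fixpoint condrel (c1 c2 : cond NS Fs) : Prop :=
  match c1, c2 with
  | CFalse, CFalse => True
  | CBool B1, CBool B2 => aeq B1 B2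
  | CNeg c1', CNeg c2' => condrel c1' c2'
  | COr a1 b1, COr a2 b2 => condrel a1 a2 /\ condrel b1 b2
  | CEx P1 c1', CEx P2 c2' => patrel P1 P2 /\ condrel c1' c2'
  | _, _ => False
  end.
Fixpoint dmlrel (q1 q2 : dml NS Fs) : Prop :=
  match q1, q2 with
  | QEmpty, QEmpty => True
  | QOk, QOk => True
  | QFact f1, QFact f2 => aeq f1 f2
  | QPlus a1 b1, QPlus a2 b2 => dmlrel a1 a2 /\ dmlrel b1 b2
  | QImp c1 r1, QImp c2 r2 => condrel c1 c2 /\ dmlrel r1 r2
  | QFrom P1 r1, QFrom P2 r2 => patrel P1 P2 /\ dmlrel r1 r2
  | _, _ => False
  end.
Definition envrel (e1 e2 : env NS Fs) :=
  List.Forall2 (fun p q => p.1 = q.1 /\ aeq p.2 q.2) e1 e2.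
Definition cirel (c1 c2 : citem NS Fs) : Prop :=
  match c1, c2 with
  | CIFrame e1 p1, CIFrame e2 p2 => envrel e1 e2 /\ condrel p1 p2
  | CIRes B1, CIRes B2 => aeq B1 B2
  | CINot, CINot => True
  | CIOrK e1 p1, CIOrK e2 p2 => envrel e1 e2 /\ condrel p1 p2
  | CIEx H1 e1 P1 p1, CIEx H2 e2 P2 p2 =>
      [/\ lrel H1 H2, envrel e1 e2, patrel P1 P2 & condrel p1 p2]
  | _, _ => False
  end.
Definition direl (d1 d2 : ditem NS Fs) : Prop :=
  match d1, d2 with
  | DIFrame e1 R1, DIFrame e2 R2 => envrel e1 e2 /\ dmlrel R1 R2
  | DIOk, DIOk => True
  | DIPlusK e1 R1, DIPlusK e2 R2 => envrel e1 e2 /\ dmlrel R1 R2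
  | DICond e1 cs1 R1, DICond e2 cs2 R2 =>
      [/\ envrel e1 e2, List.Forall2 cirel cs1 cs2 & dmlrel R1 R2]
  | DIFrom H1 e1 B1 F01 P1 R1, DIFrom H2 e2 B2 F02 P2 R2 =>
      [/\ lrel H1 H2, envrel e1 e2, B1 = B2,
          (match F01, F02 with
          | None, None => True
          | Some l1, Some l2 => lrel l1 l2
          | _, _ => False
          end) & patrel P1 P2 /\ dmlrel R1 R2]
  | _, _ => False
  end.
Definition steq (t1 t2 : state NS Fs) : Prop :=
  match t1, t2 with
  | St F1 F1' Fs1 S1, St F2 F2' Fs2 S2 =>
      [/\ lrel F1 F2, lrel F1' F2', Permutation Fs1 Fs2 & List.Forall2 direl S1 S2]
  | SNew G1 Gs1, SNew G2 Gs2 => lrel G1 G2 /\ Permutation Gs1 Gs2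
  | SFail G1 Gs1, SFail G2 Gs2 => lrel G1 G2 /\ Permutation Gs1 Gs2
  | _, _ => False
  end.

Definition nom_equiv (t1 t2 : state NS Fs) : Prop :=
  exists alpha : NS -> nat -> nat,
    [/\ (forall s n m, (s, n) \in snoms t1 -> (s, m) \in snoms t1 ->
           alpha s n = alpha s m -> n = m),
        (forall s n, (s, n) \in snoms t1 -> (s, alpha s n) \in snoms t2),
        (forall s k, (s, k) \in snoms t2 -> exists2 n, (s, n) \in snoms t1 & alpha s n = k) &
        steq (sren alpha t1) t2].

End Equality.

Section Rules.
Variables (NS : eqType) (Fs : Type) (D : data_algebra NS Fs).
Local Notation term := (term NS Fs).
Local Notation deq := (deq D).

Definition tT : term := TOp (b_true D) [::].
Definition tF : term := TOp (b_false D) [::].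

Definition meq (l1 l2 : seq term) := mrel deq l1 l2.

Definition matches_ex (H : seq term) (e : env NS Fs) (P : pattern NS Fs) : Prop :=
  exists b H', bground e P b /\
    meq H (H' ++ inst (extend e P b) (p_bang P ++ p_q P)).
Definition matches_from (H : seq term) (e : env NS Fs) (P : pattern NS Fs) : Prop :=
  exists b H', bground e P b /\
    meq H (H' ++ inst (extend e P b) (p_bang P ++ p_q P ++ p_0 P)).

Definition fmatch (e : env NS Fs) (Pstar : seq (NS * term)) (fs : seq (NS * nat)) : Prop :=
  map fst fs = map fst Pstar /\
  List.Forall2 (fun p q => deq (subst (lookup e) p.2) (TNom q.1 q.2)) Pstar fs.

Inductive cstep (F : seq term) : seq (citem NS Fs) -> seq (citem NS Fs) -> Prop :=
| CS_False Sk e :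
    cstep F (rcons Sk (CIFrame e CFalse)) (rcons Sk (CIRes tF))
| CS_Bool Sk e B :
    cstep F (rcons Sk (CIFrame e (CBool B))) (rcons Sk (CIRes (subst (lookup e) B)))
| CS_Neg Sk e psi :
    cstep F (rcons Sk (CIFrame e (CNeg psi))) (Sk ++ [:: CINot; CIFrame e psi])
| CS_Not Sk B :
    cstep F (Sk ++ [:: CINot; CIRes B]) (rcons Sk (CIRes (TOp (b_not D) [:: B])))
| CS_Or Sk e psi1 psi2 :
    cstep F (rcons Sk (CIFrame e (COr psi1 psi2))) (Sk ++ [:: CIOrK e psi1; CIFrame e psi2])
| CS_OrTrue Sk e psi B : deq B tT ->
    cstep F (Sk ++ [:: CIOrK e psi; CIRes B]) (rcons Sk (CIRes tT))
| CS_OrFalse Sk e psi B : deq B tF ->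
    cstep F (Sk ++ [:: CIOrK e psi; CIRes B]) (rcons Sk (CIFrame e psi))
| CS_ExInit Sk e P psi :
    cstep F (rcons Sk (CIFrame e (CEx P psi))) (rcons Sk (CIEx F e P psi))
| CS_ExMatch Sk H e P psi b H'' :
    bground e P b ->
    meq H (H'' ++ inst (extend e P b) (p_bang P ++ p_q P)) ->
    cstep F (rcons Sk (CIEx H e P psi))
            (Sk ++ [:: CIEx (H'' ++ inst (extend e P b) (p_bang P)) e P psi;
                      CIFrame (extend e P b) psi])
| CS_ExFalse Sk H e P psi B : deq B tF ->
    cstep F (Sk ++ [:: CIEx H e P psi; CIRes B]) (rcons Sk (CIEx H e P psi))
| CS_ExTrue Sk H e P psi B : deq B tT ->
    cstep F (Sk ++ [:: CIEx H e P psi; CIRes B]) (rcons Sk (CIRes tT))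
| CS_ExNoMatch Sk H e P psi : ~ matches_ex H e P ->
    cstep F (rcons Sk (CIEx H e P psi)) (rcons Sk (CIRes tF)).

Inductive dstep : state NS Fs -> state NS Fs -> Prop :=
| DS_OkOk F F' Fs Sk :
    dstep (St F F' Fs (Sk ++ [:: DIOk; DIOk])) (St F F' Fs (rcons Sk DIOk))
| DS_Ok F F' Fs Sk e :
    dstep (St F F' Fs (rcons Sk (DIFrame e QOk))) (St F F' Fs (rcons Sk DIOk))
| DS_Empty F F' Fs Sk e :
    dstep (St F F' Fs (rcons Sk (DIFrame e QEmpty))) (St F F' Fs Sk)
| DS_Fact F F' Fs Sk e f :
    dstep (St F F' Fs (rcons Sk (DIFrame e (QFact f))))
          (St F (rcons F' (subst (lookup e) f)) Fs (rcons Sk DIOk))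
| DS_Plus F F' Fs Sk e R1 R2 :
    dstep (St F F' Fs (rcons Sk (DIFrame e (QPlus R1 R2))))
          (St F F' Fs (Sk ++ [:: DIPlusK e R2; DIFrame e R1]))
| DS_PlusOk F F' Fs Sk e R2 :
    dstep (St F F' Fs (Sk ++ [:: DIPlusK e R2; DIOk]))
          (St F F' Fs (Sk ++ [:: DIOk; DIFrame e R2]))
| DS_PlusTop F F' Fs Sk e R2 :
    dstep (St F F' Fs (rcons Sk (DIPlusK e R2))) (St F F' Fs (rcons Sk (DIFrame e R2)))
| DS_Imp F F' Fs Sk e phi R :
    dstep (St F F' Fs (rcons Sk (DIFrame e (QImp phi R))))
          (St F F' Fs (rcons Sk (DICond e [:: CIFrame e phi] R)))
| DS_CondFalse F F' Fs Sk e B R : deq B tF ->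
    dstep (St F F' Fs (rcons Sk (DICond e [:: CIRes B] R))) (St F F' Fs Sk)
| DS_CondTrue F F' Fs Sk e B R : deq B tT ->
    dstep (St F F' Fs (rcons Sk (DICond e [:: CIRes B] R)))
          (St F F' Fs (rcons Sk (DIFrame e R)))
| DS_Cond F F' Fs Sk e cs cs' R : cstep F cs cs' ->
    dstep (St F F' Fs (rcons Sk (DICond e cs R))) (St F F' Fs (rcons Sk (DICond e cs' R)))
| DS_FromInit F F' Fs Sk e P R :
    dstep (St F F' Fs (rcons Sk (DIFrame e (QFrom P R))))
          (St F F' Fs (rcons Sk (DIFrom F e false None P R)))
| DS_FromMatch F F' Fs Sk H e B P R b G H' K fs :
    bground e P b ->
    meq F (G ++ inst (extend e P b) (p_bang P ++ p_q P ++ p_0 P)) ->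
    meq H (H' ++ inst (extend e P b) (p_bang P ++ p_q P ++ p_0 P)) ->
    Permutation Fs (K ++ fs) ->
    fmatch (extend e P b) (p_star P) fs ->
    dstep (St F F' Fs (rcons Sk (DIFrom H e B None P R)))
          (St (G ++ inst (extend e P b) (p_bang P ++ p_q P)) F' (K ++ upsilon fs)
              (Sk ++ [:: DIFrom (H' ++ inst (extend e P b) (p_bang P)) e B
                               (Some (inst (extend e P b) (p_0 P))) P R;
                        DIFrame (extend e P b) R]))
| DS_FromRestore F F' Fs Sk H e B F0 P R :
    dstep (St F F' Fs (rcons Sk (DIFrom H e B (Some F0) P R)))
          (St (F ++ F0) F' Fs (rcons Sk (DIFrom (H ++ F0) e B None P R)))
| DS_FromOk F F' Fs Sk H e B F0 P R :
    dstep (St F F' Fs (Sk ++ [:: DIFrom H e B (Some F0) P R; DIOk]))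
          (St F F' Fs (rcons Sk (DIFrom H e true None P R)))
| DS_FromNoMatch F F' Fs Sk H e B P R : ~ matches_from H e P ->
    dstep (St F F' Fs (rcons Sk (DIFrom H e B None P R)))
          (St F F' Fs (if B then rcons Sk DIOk else Sk))
| DS_New F F' Fs :
    dstep (St F F' Fs [:: DIOk]) (SNew (F ++ F') Fs)
| DS_Fail F F' Fs :
    dstep (St F F' Fs [::]) (SFail (F ++ F') Fs).

End Rules.

(* Nominal values carry no structure besides equality, so the data algebra, the structural
   axioms and hence every rewrite rule commute with injective renamings of nominal values;
   every rule also respects equality modulo the structural axioms.  A step t1 -> t1' is
   therefore transported along the bijection alpha of t1 ~ t2 to a step t2 -> t2' with
   t1' ~ t2' -- except for the fresh-fact rule, which replaces iota_m by iota_(m+1), so that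
   alpha must also satisfy alpha(m+1) = alpha(m)+1 at every fresh-fact counter m of t1.  The
   freshness condition makes iota_(m+1) new in t1 and alpha(m)+1 new in t2, so alpha extends
   to an injection with this property.  Reflexivity, symmetry and transitivity come from
   extending partial bijections to total injections: the identity, a left inverse and a
   composite. *)

From Stdlib Require List.
From Stdlib Require Import Permutation.
From mathcomp Require Import all_boot.

Set Implicit Arguments.
Unset Strict Implicit.
Unset Printing Implicit Defensive.

Lemma Forall2_map A B A' B' (r : A -> B -> Prop) (r' : A' -> B' -> Prop)
    (f : A -> A') (g : B -> B') l1 l2 :
  (forall x y, r x y -> r' (f x) (g y)) ->
  List.Forall2 r l1 l2 -> List.Forall2 r' (map f l1) (map g l2).
Proof. by move=> H; elim=> //= x y l1' l2' /H rxy _ IH; constructor. Qed.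

Lemma Forall2_sym A B (r : A -> B -> Prop) (r' : B -> A -> Prop) l1 l2 :
  (forall x y, r x y -> r' y x) -> List.Forall2 r l1 l2 -> List.Forall2 r' l2 l1.
Proof. by move=> H; elim=> // x y l1' l2' /H ryx _ IH; constructor. Qed.

Lemma Forall2_reflexive A (r : A -> A -> Prop) l :
  (forall x, r x x) -> List.Forall2 r l l.
Proof. by move=> H; elim: l => [|x l IH]; constructor. Qed.

Lemma Forall2_trans A B C (r1 : A -> B -> Prop) (r2 : B -> C -> Prop)
    (r3 : A -> C -> Prop) l1 l2 l3 :
  (forall x y z, r1 x y -> r2 y z -> r3 x z) ->
  List.Forall2 r1 l1 l2 -> List.Forall2 r2 l2 l3 -> List.Forall2 r3 l1 l3.
Proof.
move=> H F; elim: F l3 => [|x y l1' l2' rxy _ IH] l3 F'; inversion F'; subst;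
  constructor; eauto.
Qed.

Lemma Forall2_rcons A B (r : A -> B -> Prop) s s' x y :
  List.Forall2 r s s' -> r x y -> List.Forall2 r (rcons s x) (rcons s' y).
Proof. by move=> H1 H2; rewrite -!cats1; apply: List.Forall2_app; repeat constructor. Qed.

Lemma Forall2_cat2 A B (r : A -> B -> Prop) s s' x y z w :
  List.Forall2 r s s' -> r x y -> r z w ->
  List.Forall2 r (s ++ [:: x; z]) (s' ++ [:: y; w]).
Proof. by move=> H1 H2 H3; apply: List.Forall2_app; repeat constructor. Qed.

Lemma Forall2_nil_inv {A B} {r : A -> B -> Prop} {l} : List.Forall2 r [::] l -> l = [::].
Proof. by move=> H; inversion H. Qed.

Lemma Forall2_seq1_inv {A B} {r : A -> B -> Prop} {x l} :
  List.Forall2 r [:: x] l -> exists2 y, l = [:: y] & r x y.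
Proof. by move=> H; inversion H; subst; rewrite (Forall2_nil_inv H4); exists y. Qed.

Lemma Forall2_rcons_inv {A B} {r : A -> B -> Prop} {s x l} :
  List.Forall2 r (rcons s x) l ->
  exists s' y, [/\ l = rcons s' y, List.Forall2 r s s' & r x y].
Proof.
rewrite -cats1 => /List.Forall2_app_inv_l [l1 [l2 [H1 [H2 ->]]]].
have [y -> Hy] := Forall2_seq1_inv H2.
by exists l1, y; rewrite -cats1.
Qed.

Lemma Forall2_cat2_inv {A B} {r : A -> B -> Prop} {s x z l} :
  List.Forall2 r (s ++ [:: x; z]) l ->
  exists s' y w, [/\ l = s' ++ [:: y; w], List.Forall2 r s s', r x y & r z w].
Proof.
move=> /List.Forall2_app_inv_l [l1 [l2 [H1 [H2 ->]]]].
inversion H2; subst; have [w -> Hw] := Forall2_seq1_inv H5.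
by exists l1, y, w.
Qed.

Lemma Permutation_mem (T : eqType) (l1 l2 : seq T) : Permutation l1 l2 -> l1 =i l2.
Proof.
elim=> [|x l l' _ IH|x y l|l l' l'' _ IH1 _ IH2] //= z.
- by rewrite !in_cons IH.
- by rewrite !in_cons orbCA.
- by rewrite IH1 IH2.
Qed.

Lemma eq_mem_cat (T : eqType) (X1 X2 Y1 Y2 : seq T) :
  X1 =i Y1 -> X2 =i Y2 -> X1 ++ X2 =i Y1 ++ Y2.
Proof. by move=> H1 H2 x; rewrite !mem_cat H1 H2. Qed.

Lemma Permutation_flatten_mem A (B : eqType) (N : A -> seq B) (l1 l2 : seq A) :
  Permutation l1 l2 -> flatten (map N l1) =i flatten (map N l2).
Proof.
elim=> [|x l l' _ IH|x y l|l l' l'' _ IH1 _ IH2] //= z.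
- by rewrite !mem_cat IH.
- by rewrite !mem_cat orbCA.
- by rewrite IH1 IH2.
Qed.

Lemma Forall2_flatten_mem A (B : eqType) (r : A -> A -> Prop) (N : A -> seq B) l1 l2 :
  (forall x y, r x y -> N x =i N y) ->
  List.Forall2 r l1 l2 -> flatten (map N l1) =i flatten (map N l2).
Proof. by move=> H; elim=> //= x y a b /H Nxy _ IH; exact: eq_mem_cat. Qed.

Section MultisetRelation.
Variables (A : Type) (r : A -> A -> Prop).

Lemma mrel_refl l : (forall x, r x x) -> mrel r l l.
Proof. by move=> H; exists l => //; exact: Forall2_reflexive. Qed.

Lemma mrel_sym l1 l2 : (forall x y, r x y -> r y x) -> mrel r l1 l2 -> mrel r l2 l1.
Proof.
move=> H [l /Permutation_sym Hp /(Forall2_sym H) Hf].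
by have [l' [Hp' Hf']] := Permutation_Forall2 Hp Hf; exists l'.
Qed.

Lemma mrel_trans l1 l2 l3 : (forall x y z, r x y -> r y z -> r x z) ->
  mrel r l1 l2 -> mrel r l2 l3 -> mrel r l1 l3.
Proof.
move=> H [l Hp Hf] [m Hq Hg]; have [m' [Hm Hg']] := Permutation_Forall2 Hp Hg.
by exists m'; [exact: Permutation_trans Hq Hm | exact: Forall2_trans Hf Hg'].
Qed.

Lemma mrel_impl (r' : A -> A -> Prop) l1 l2 :
  (forall x y, r x y -> r' x y) -> mrel r l1 l2 -> mrel r' l1 l2.
Proof. by move=> H [l Hp Hf]; exists l => //; exact: List.Forall2_impl Hf. Qed.

Lemma mrel_map A' (r' : A' -> A' -> Prop) (f g : A -> A') l1 l2 :
  (forall x y, r x y -> r' (f x) (g y)) -> mrel r l1 l2 -> mrel r' (map f l1) (map g l2).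
Proof.
by move=> H [l Hp Hf]; exists (map g l); [exact: Permutation_map | exact: Forall2_map Hf].
Qed.

Lemma mrel_cat a b c d : mrel r a b -> mrel r c d -> mrel r (a ++ c) (b ++ d).
Proof.
move=> [l Hp Hf] [m Hq Hg]; exists (l ++ m); first exact: Permutation_app.
exact: List.Forall2_app.
Qed.

Lemma mrel_flatten_mem (B : eqType) (N : A -> seq B) l1 l2 :
  (forall x y, r x y -> N x =i N y) -> mrel r l1 l2 ->
  flatten (map N l1) =i flatten (map N l2).
Proof.
move=> H [l Hp Hf] z.
by rewrite (Forall2_flatten_mem H Hf) (Permutation_flatten_mem N Hp).
Qed.

End MultisetRelation.

Section Renaming.
Variables (NS : eqType) (Fs : Type).
Local Notation term := (term NS Fs).
Local Notation renaming := (NS -> nat -> nat).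

Definition comp_ren (a b : renaming) : renaming := fun s n => a s (b s n).
Definition id_ren : renaming := fun _ n => n.
Definition ren_nom (a : renaming) (p : NS * nat) := (p.1, a p.1 p.2).
Definition agree (a b : renaming) (X : seq (NS * nat)) :=
  forall p, p \in X -> a p.1 p.2 = b p.1 p.2.

Lemma agree_cat a b X Y : agree a b (X ++ Y) <-> agree a b X /\ agree a b Y.
Proof.
split=> [H|[HX HY] p]; last by rewrite mem_cat => /orP [/HX|/HY].
by split=> p Hp; apply: H; rewrite mem_cat Hp ?orbT.
Qed.

Fixpoint term_nested_ind (P : term -> Prop) (Hv : forall x, P (TVar x))
    (Hn : forall s n, P (TNom s n))
    (Ho : forall f ts, List.Forall P ts -> P (TOp f ts)) (t : term) : P t :=
  match t with
  | TVar x => Hv x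
  | TNom s n => Hn s n
  | TOp f ts => Ho f ts ((fix all_P (l : seq term) : List.Forall P l :=
        match l with
        | [::] => List.Forall_nil P
        | x :: l' => List.Forall_cons x (term_nested_ind Hv Hn Ho x) (all_P l')
        end) ts)
  end.

Section LiftToLists.
Variables (X : Type) (rX : renaming -> X -> X) (nX : X -> seq (NS * nat)).

Lemma map_ren_comp a b l : (forall x, rX a (rX b x) = rX (comp_ren a b) x) ->
  map (rX a) (map (rX b) l) = map (rX (comp_ren a b)) l.
Proof. by move=> H; rewrite -map_comp; apply: eq_map. Qed.

Lemma map_ren_ext a b l : (forall x, agree a b (nX x) -> rX a x = rX b x) ->
  agree a b (flatten (map nX l)) -> map (rX a) l = map (rX b) l.
Proof. by move=> H; elim: l => //= x l IH /agree_cat [/H -> /IH ->]. Qed.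

Lemma map_ren_id l : (forall x, rX id_ren x = x) -> map (rX id_ren) l = l.
Proof. by move=> H; rewrite (eq_map H) map_id. Qed.

Lemma flatten_noms_ren a l : (forall x, nX (rX a x) = map (ren_nom a) (nX x)) ->
  flatten (map nX (map (rX a) l)) = map (ren_nom a) (flatten (map nX l)).
Proof. by move=> H; elim: l => //= x l ->; rewrite H map_cat. Qed.

End LiftToLists.

Lemma ren_comp a b (t : term) : ren a (ren b t) = ren (comp_ren a b) t.
Proof.
elim/term_nested_ind: t => //= f ts H; congr TOp; rewrite -map_comp.
by elim: H => //= x l -> _ ->.
Qed.

Lemma ren_ext a b (t : term) : agree a b (tnoms t) -> ren a t = ren b t.
Proof.
elim/term_nested_ind: t => //= [s n|f ts H] Hab; first by rewrite (Hab (s, n)) ?mem_head.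
by congr TOp; elim: H Hab => //= x l Hx _ IH /agree_cat [/Hx -> /IH ->].
Qed.

Lemma ren_id (t : term) : ren id_ren t = t.
Proof.
elim/term_nested_ind: t => //= f ts H; congr TOp.
by elim: H => //= x l -> _ ->.
Qed.

Lemma tnoms_ren a (t : term) : tnoms (ren a t) = map (ren_nom a) (tnoms t).
Proof.
elim/term_nested_ind: t => //= f ts H.
by elim: H => //= x l -> _ ->; rewrite map_cat.
Qed.

Lemma tvars_ren a (t : term) : tvars (ren a t) = tvars t.
Proof.
elim/term_nested_ind: t => //= f ts H.
by elim: H => //= x l -> _ ->.
Qed.

Lemma ren_subst a sg sg' (t : term) : (forall x, sg' x = ren a (sg x)) ->
  ren a (subst sg t) = subst sg' (ren a t).
Proof.
move=> E; elim/term_nested_ind: t => //= f ts H; congr TOp; rewrite -!map_comp.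
by elim: H => //= x l -> _ ->.
Qed.

Lemma lren_comp a b (l : seq term) : lren a (lren b l) = lren (comp_ren a b) l.
Proof. exact: map_ren_comp (ren_comp a b). Qed.
Lemma lren_ext a b (l : seq term) : agree a b (lnoms l) -> lren a l = lren b l.
Proof. exact: map_ren_ext (@ren_ext a b). Qed.
Lemma lren_id (l : seq term) : lren id_ren l = l.
Proof. exact: map_ren_id ren_id. Qed.
Lemma lnoms_ren a (l : seq term) : lnoms (lren a l) = map (ren_nom a) (lnoms l).
Proof. exact: flatten_noms_ren (tnoms_ren a). Qed.
Lemma lren_cat a (l1 l2 : seq term) : lren a (l1 ++ l2) = lren a l1 ++ lren a l2.
Proof. exact: map_cat. Qed.

Section PairLists.
Variable K : Type.

Definition pair_ren a (p : K * term) := (p.1, ren a p.2).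
Definition pair_noms (p : K * term) := tnoms p.2.
Definition pairs_ren a (l : seq (K * term)) := map (pair_ren a) l.
Definition pairs_noms (l : seq (K * term)) := flatten (map pair_noms l).

Lemma pairs_ren_comp a b l : pairs_ren a (pairs_ren b l) = pairs_ren (comp_ren a b) l.
Proof. by apply: map_ren_comp => p; rewrite /pair_ren ren_comp. Qed.
Lemma pairs_ren_ext a b l : agree a b (pairs_noms l) -> pairs_ren a l = pairs_ren b l.
Proof. by apply: map_ren_ext => p /ren_ext; rewrite /pair_ren => ->. Qed.
Lemma pairs_ren_id l : pairs_ren id_ren l = l.
Proof. by apply: map_ren_id => -[k t]; rewrite /pair_ren ren_id. Qed.
Lemma pairs_noms_ren a l : pairs_noms (pairs_ren a l) = map (ren_nom a) (pairs_noms l).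
Proof. by apply: flatten_noms_ren => p; exact: tnoms_ren. Qed.

End PairLists.

Lemma eren_comp a b (e : env NS Fs) : eren a (eren b e) = eren (comp_ren a b) e.
Proof. exact: pairs_ren_comp. Qed.
Lemma eren_ext a b (e : env NS Fs) : agree a b (enoms e) -> eren a e = eren b e.
Proof. exact: pairs_ren_ext. Qed.
Lemma eren_id (e : env NS Fs) : eren id_ren e = e.
Proof. exact: pairs_ren_id. Qed.
Lemma enoms_ren a (e : env NS Fs) : enoms (eren a e) = map (ren_nom a) (enoms e).
Proof. exact: pairs_noms_ren. Qed.

Lemma pren_comp a b (P : pattern NS Fs) : pren a (pren b P) = pren (comp_ren a b) P.
Proof. by case: P => ? ? ? ?; rewrite /pren /= !lren_comp; congr Pat; exact: pairs_ren_comp. Qed.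
Lemma pren_ext a b (P : pattern NS Fs) : agree a b (pnoms P) -> pren a P = pren b P.
Proof.
case: P => ? ? ? ?; rewrite /pnoms /pren /=.
case/agree_cat=> /lren_ext -> /agree_cat [/lren_ext -> /agree_cat [/lren_ext -> Hst]].
by congr Pat; exact: pairs_ren_ext.
Qed.
Lemma pren_id (P : pattern NS Fs) : pren id_ren P = P.
Proof. by case: P => ? ? ? ?; rewrite /pren /= !lren_id; congr Pat; exact: pairs_ren_id. Qed.
Lemma pnoms_ren a (P : pattern NS Fs) : pnoms (pren a P) = map (ren_nom a) (pnoms P).
Proof.
case: P => ? ? ? ?; rewrite /pnoms /= !lnoms_ren !map_cat.
by congr (_ ++ (_ ++ (_ ++ _))); exact: pairs_noms_ren.
Qed.

Lemma cren_comp a b (c : cond NS Fs) : cren a (cren b c) = cren (comp_ren a b) c.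
Proof. by elim: c => //= *; rewrite ?ren_comp ?pren_comp; congruence. Qed.
Lemma cren_ext a b (c : cond NS Fs) : agree a b (cnoms c) -> cren a c = cren b c.
Proof.
elim: c => //= [B /ren_ext -> //|c IH /IH -> //|c1 IH1 c2 IH2|P c IH].
- by case/agree_cat=> /IH1 -> /IH2 ->.
- by case/agree_cat=> /pren_ext -> /IH ->.
Qed.
Lemma cren_id (c : cond NS Fs) : cren id_ren c = c.
Proof. by elim: c => //= *; rewrite ?ren_id ?pren_id; congruence. Qed.
Lemma cnoms_ren a (c : cond NS Fs) : cnoms (cren a c) = map (ren_nom a) (cnoms c).
Proof. by elim: c => //= *; rewrite ?tnoms_ren ?pnoms_ren ?map_cat; congruence. Qed.

Lemma qren_comp a b (q : dml NS Fs) : qren a (qren b q) = qren (comp_ren a b) q.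
Proof. by elim: q => //= *; rewrite ?ren_comp ?pren_comp ?cren_comp; congruence. Qed.
Lemma qren_ext a b (q : dml NS Fs) : agree a b (qnoms q) -> qren a q = qren b q.
Proof.
elim: q => //= [B /ren_ext -> //|q1 IH1 q2 IH2|c q IH|P q IH].
- by case/agree_cat=> /IH1 -> /IH2 ->.
- by case/agree_cat=> /cren_ext -> /IH ->.
- by case/agree_cat=> /pren_ext -> /IH ->.
Qed.
Lemma qren_id (q : dml NS Fs) : qren id_ren q = q.
Proof. by elim: q => //= *; rewrite ?ren_id ?pren_id ?cren_id; congruence. Qed.
Lemma qnoms_ren a (q : dml NS Fs) : qnoms (qren a q) = map (ren_nom a) (qnoms q).
Proof.
by elim: q => //= *; rewrite ?tnoms_ren ?pnoms_ren ?cnoms_ren ?map_cat; congruence.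
Qed.

Lemma ciren_comp a b (c : citem NS Fs) : ciren a (ciren b c) = ciren (comp_ren a b) c.
Proof. by case: c => * /=; rewrite ?ren_comp ?eren_comp ?cren_comp ?lren_comp ?pren_comp. Qed.
Lemma ciren_ext a b (c : citem NS Fs) : agree a b (cinoms c) -> ciren a c = ciren b c.
Proof.
case: c => //= [e p|B /ren_ext -> //|e p|H e P p];
  try by case/agree_cat=> /eren_ext -> /cren_ext ->.
case/agree_cat=> /lren_ext -> /agree_cat [/eren_ext -> /agree_cat [/pren_ext ->]].
by move/cren_ext ->.
Qed.
Lemma ciren_id (c : citem NS Fs) : ciren id_ren c = c.
Proof. by case: c => * /=; rewrite ?ren_id ?eren_id ?cren_id ?lren_id ?pren_id. Qed.
Lemma cinoms_ren a (c : citem NS Fs) : cinoms (ciren a c) = map (ren_nom a) (cinoms c).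
Proof.
by case: c => * /=; rewrite ?tnoms_ren ?enoms_ren ?cnoms_ren ?lnoms_ren ?pnoms_ren ?map_cat.
Qed.

Lemma diren_comp a b (d : ditem NS Fs) : diren a (diren b d) = diren (comp_ren a b) d.
Proof.
case: d => [e R||e R|e cs R|H e B F0 P R] /=;
  rewrite ?eren_comp ?qren_comp ?lren_comp ?pren_comp ?(map_ren_comp _ (ciren_comp a b)) //.
by case: F0 => //= l; rewrite lren_comp.
Qed.
Lemma diren_ext a b (d : ditem NS Fs) : agree a b (dinoms d) -> diren a d = diren b d.
Proof.
case: d => //= [e R|e R|e cs R|H e B F0 P R]; try by case/agree_cat=> /eren_ext -> /qren_ext ->.
  case/agree_cat=> /eren_ext -> /agree_cat [HC /qren_ext ->].
  by rewrite (map_ren_ext (@ciren_ext a b) HC).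
case/agree_cat=> /lren_ext -> /agree_cat [/eren_ext -> /agree_cat [HF0]].
case/agree_cat=> /pren_ext -> /qren_ext ->.
by case: F0 HF0 => //= l /lren_ext ->.
Qed.
Lemma diren_id (d : ditem NS Fs) : diren id_ren d = d.
Proof.
case: d => [e R||e R|e cs R|H e B F0 P R] /=;
  rewrite ?eren_id ?qren_id ?lren_id ?pren_id ?(map_ren_id _ ciren_id) //.
by case: F0 => //= l; rewrite lren_id.
Qed.
Lemma dinoms_ren a (d : ditem NS Fs) : dinoms (diren a d) = map (ren_nom a) (dinoms d).
Proof.
case: d => [e R||e R|e cs R|H e B F0 P R] /=;
  rewrite ?enoms_ren ?qnoms_ren ?lnoms_ren ?pnoms_ren ?(flatten_noms_ren _ (cinoms_ren a))
  ?map_cat //.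
by case: F0 => //= l; rewrite lnoms_ren.
Qed.

Lemma fren_comp a b (fs : seq (NS * nat)) : fren a (fren b fs) = fren (comp_ren a b) fs.
Proof. by rewrite /fren -map_comp. Qed.
Lemma fren_ext a b (fs : seq (NS * nat)) : agree a b fs -> fren a fs = fren b fs.
Proof. by move=> H; apply/eq_in_map => p /H /= ->. Qed.
Lemma fren_id (fs : seq (NS * nat)) : fren id_ren fs = fs.
Proof. by rewrite /fren; elim: fs => //= -[s n] l ->. Qed.

Lemma sren_comp a b (t : state NS Fs) : sren a (sren b t) = sren (comp_ren a b) t.
Proof.
by case: t => * /=; rewrite ?lren_comp ?fren_comp ?(map_ren_comp _ (diren_comp a b)).
Qed.
Lemma sren_ext a b (t : state NS Fs) : agree a b (snoms t) -> sren a t = sren b t.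
Proof.
rewrite /snoms; case: t => [F F' fs S|G gs|G gs] /=; last 2 first.
- by case/agree_cat=> /lren_ext -> /fren_ext ->.
- by case/agree_cat=> /lren_ext -> /fren_ext ->.
case/agree_cat=> /agree_cat [/lren_ext -> /agree_cat [/lren_ext -> HS]] /fren_ext ->.
by rewrite (map_ren_ext (@diren_ext a b) HS).
Qed.
Lemma sren_id (t : state NS Fs) : sren id_ren t = t.
Proof. by case: t => * /=; rewrite ?lren_id ?fren_id ?(map_ren_id _ diren_id). Qed.
Lemma snoms_ren a (t : state NS Fs) : snoms (sren a t) = map (ren_nom a) (snoms t).
Proof.
rewrite /snoms; case: t => * /=;
  by rewrite ?lnoms_ren ?(flatten_noms_ren _ (dinoms_ren a)) !map_cat.
Qed.

End Renaming.

Arguments id_ren {NS}.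

Section StructuralEquality.
Variables (NS : eqType) (Fs : Type) (D : data_algebra NS Fs).
Local Notation term := (term NS Fs).
Local Notation aeq := (aeq D).

Definition pair_rel K (p q : K * term) := p.1 = q.1 /\ aeq p.2 q.2.

Lemma pair_rel_refl K (p : K * term) : pair_rel p p.
Proof. by split=> //; exact: aeq_refl. Qed.
Lemma pair_rel_sym K (p q : K * term) : pair_rel p q -> pair_rel q p.
Proof. by case=> ? /aeq_sym. Qed.
Lemma pair_rel_trans K (p q r : K * term) : pair_rel p q -> pair_rel q r -> pair_rel p r.
Proof. by case=> E1 H1 [E2 H2]; split; [rewrite E1 | exact: aeq_trans H2]. Qed.

Lemma lrel_refl l : lrel D l l.
Proof. exact/mrel_refl/aeq_refl. Qed.
Lemma lrel_sym l1 l2 : lrel D l1 l2 -> lrel D l2 l1.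
Proof. exact/mrel_sym/aeq_sym. Qed.
Lemma lrel_trans l1 l2 l3 : lrel D l1 l2 -> lrel D l2 l3 -> lrel D l1 l3.
Proof. exact/mrel_trans/aeq_trans. Qed.

Lemma lrel_rcons l1 l2 x y : lrel D l1 l2 -> aeq x y -> lrel D (rcons l1 x) (rcons l2 y).
Proof.
move=> H Hxy; rewrite -!cats1; apply: mrel_cat H _.
by exists [:: y]; [exact: Permutation_refl | constructor].
Qed.

Lemma pairs_rel_refl K (l : seq (K * term)) : mrel (@pair_rel K) l l.
Proof. exact/mrel_refl/pair_rel_refl. Qed.
Lemma pairs_rel_sym K (l1 l2 : seq (K * term)) :
  mrel (@pair_rel K) l1 l2 -> mrel (@pair_rel K) l2 l1.
Proof. exact/mrel_sym/pair_rel_sym. Qed.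
Lemma pairs_rel_trans K (l1 l2 l3 : seq (K * term)) :
  mrel (@pair_rel K) l1 l2 -> mrel (@pair_rel K) l2 l3 -> mrel (@pair_rel K) l1 l3.
Proof. exact/mrel_trans/pair_rel_trans. Qed.

Lemma patrel_refl P : patrel D P P.
Proof. by split; [exact: lrel_refl..|exact: pairs_rel_refl]. Qed.
Lemma patrel_sym P1 P2 : patrel D P1 P2 -> patrel D P2 P1.
Proof. by case=> *; split; [exact: lrel_sym..|exact: pairs_rel_sym]. Qed.
Lemma patrel_trans P1 P2 P3 : patrel D P1 P2 -> patrel D P2 P3 -> patrel D P1 P3.
Proof. by case=> ? ? ? ? [? ? ? ?]; split; eauto using lrel_trans, pairs_rel_trans. Qed.

Lemma condrel_refl c : condrel D c c.
Proof. by elim: c => //= *; try split; auto using patrel_refl, aeq_refl. Qed.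
Lemma condrel_sym c1 c2 : condrel D c1 c2 -> condrel D c2 c1.
Proof.
elim: c1 c2 => [|B|c IH|a IHa b IHb|P c IH] [|B2|c2|a2 b2|P2 c2] //=.
- exact: aeq_sym.
- exact: IH.
- by case=> /IHa ? /IHb ?.
- by case=> /patrel_sym ? /IH ?.
Qed.
Lemma condrel_trans c1 c2 c3 : condrel D c1 c2 -> condrel D c2 c3 -> condrel D c1 c3.
Proof.
elim: c1 c2 c3 => [|B|c IH|a IHa b IHb|P c IH] [|B2|c2|a2 b2|P2 c2]
  [|B3|c3|a3 b3|P3 c3] //=.
- exact: aeq_trans.
- exact: IH.
- by case=> H1 H2 [/(IHa _ _ H1) ? /(IHb _ _ H2) ?].
- by case=> H1 H2 [/(patrel_trans H1) ? /(IH _ _ H2) ?].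
Qed.

Lemma dmlrel_refl q : dmlrel D q q.
Proof. by elim: q => //= *; try split; auto using patrel_refl, aeq_refl, condrel_refl. Qed.
Lemma dmlrel_sym q1 q2 : dmlrel D q1 q2 -> dmlrel D q2 q1.
Proof.
elim: q1 q2 => [||B|a IHa b IHb|c q IH|P q IH] [||B2|a2 b2|c2 q2|P2 q2] //=.
- exact: aeq_sym.
- by case=> /IHa ? /IHb ?.
- by case=> /condrel_sym ? /IH ?.
- by case=> /patrel_sym ? /IH ?.
Qed.
Lemma dmlrel_trans q1 q2 q3 : dmlrel D q1 q2 -> dmlrel D q2 q3 -> dmlrel D q1 q3.
Proof.
elim: q1 q2 q3 => [||B|a IHa b IHb|c q IH|P q IH] [||B2|a2 b2|c2 q2|P2 q2]
  [||B3|a3 b3|c3 q3|P3 q3] //=.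
- exact: aeq_trans.
- by case=> H1 H2 [/(IHa _ _ H1) ? /(IHb _ _ H2) ?].
- by case=> H1 H2 [/(condrel_trans H1) ? /(IH _ _ H2) ?].
- by case=> H1 H2 [/(patrel_trans H1) ? /(IH _ _ H2) ?].
Qed.

Lemma envrel_refl e : envrel D e e.
Proof. exact/Forall2_reflexive/pair_rel_refl. Qed.
Lemma envrel_sym e1 e2 : envrel D e1 e2 -> envrel D e2 e1.
Proof. exact/Forall2_sym/pair_rel_sym. Qed.
Lemma envrel_trans e1 e2 e3 : envrel D e1 e2 -> envrel D e2 e3 -> envrel D e1 e3.
Proof. exact/Forall2_trans/pair_rel_trans. Qed.

Lemma cirel_refl c : cirel D c c.
Proof.
by case: c => *; rewrite /=; try split;
  auto using envrel_refl, condrel_refl, aeq_refl, lrel_refl, patrel_refl.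
Qed.
Lemma cirel_sym c1 c2 : cirel D c1 c2 -> cirel D c2 c1.
Proof.
case: c1 c2 => [e p|B||e p|H e P p] [e' p'|B'||e' p'|H' e' P' p'] //=.
- by case=> /envrel_sym ? /condrel_sym ?.
- exact: aeq_sym.
- by case=> /envrel_sym ? /condrel_sym ?.
- by case=> /lrel_sym ? /envrel_sym ? /patrel_sym ? /condrel_sym ?.
Qed.
Lemma cirel_trans c1 c2 c3 : cirel D c1 c2 -> cirel D c2 c3 -> cirel D c1 c3.
Proof.
case: c1 c2 c3 => [e p|B||e p|H e P p] [e' p'|B'||e' p'|H' e' P' p']
  [e3 p3|B3||e3 p3|H3 e3 P3 p3] //=.
- by case=> ? ? [? ?]; split; [apply: envrel_trans|apply: condrel_trans]; eauto.
- exact: aeq_trans.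
- by case=> ? ? [? ?]; split; [apply: envrel_trans|apply: condrel_trans]; eauto.
- case=> ? ? ? ? [? ? ? ?]; split;
    [apply: lrel_trans|apply: envrel_trans|apply: patrel_trans|apply: condrel_trans]; eauto.
Qed.

Lemma direl_refl d : direl D d d.
Proof.
case: d => [e R||e R|e cs R|H e B F0 P R] /=; try split;
  auto using envrel_refl, dmlrel_refl, lrel_refl, patrel_refl.
- exact/Forall2_reflexive/cirel_refl.
- by case: F0 => //= l; exact: lrel_refl.
Qed.
Lemma direl_sym d1 d2 : direl D d1 d2 -> direl D d2 d1.
Proof.
case: d1 d2 => [e R||e R|e cs R|H e B F0 P R] [e' R'||e' R'|e' cs' R'|H' e' B' F0' P' R'] //=.
- by case=> /envrel_sym ? /dmlrel_sym ?.
- by case=> /envrel_sym ? /dmlrel_sym ?.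
- by case=> /envrel_sym ? /(Forall2_sym cirel_sym) ? /dmlrel_sym ?.
- case=> /lrel_sym ? /envrel_sym ? -> HF [/patrel_sym ? /dmlrel_sym ?]; split=> //.
  by case: F0 F0' HF => [l|] [l'|] //=; exact: lrel_sym.
Qed.
Lemma direl_trans d1 d2 d3 : direl D d1 d2 -> direl D d2 d3 -> direl D d1 d3.
Proof.
case: d1 d2 d3 => [e R||e R|e cs R|H e B F0 P R] [e' R'||e' R'|e' cs' R'|H' e' B' F0' P' R']
  [e3 R3||e3 R3|e3 cs3 R3|H3 e3 B3 F03 P3 R3] //=.
- by case=> ? ? [? ?]; split; [apply: envrel_trans|apply: dmlrel_trans]; eauto.
- by case=> ? ? [? ?]; split; [apply: envrel_trans|apply: dmlrel_trans]; eauto.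
- case=> ? Hc ? [? Hc' ?]; split;
    [apply: envrel_trans|exact: Forall2_trans cirel_trans Hc Hc'|apply: dmlrel_trans]; eauto.
- case=> ? ? -> HF [? ?] [? ? -> HF' [? ?]]; split=> //;
    [apply: lrel_trans|apply: envrel_trans| |split; [apply: patrel_trans|apply: dmlrel_trans]];
    eauto.
  by case: F0 F0' F03 HF HF' => [l|] [l'|] [l''|] //=; exact: lrel_trans.
Qed.

Lemma steq_refl t : steq D t t.
Proof.
case: t => *; rewrite /=; try split; auto using lrel_refl, Permutation_refl.
exact/Forall2_reflexive/direl_refl.
Qed.
Lemma steq_sym t1 t2 : steq D t1 t2 -> steq D t2 t1.
Proof.
case: t1 t2 => [F F' f S|G g|G g] [F2 F2' f2 S2|G2 g2|G2 g2] //=.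
- by case=> /lrel_sym ? /lrel_sym ? /Permutation_sym ? /(Forall2_sym direl_sym) ?.
- by case=> /lrel_sym ? /Permutation_sym ?.
- by case=> /lrel_sym ? /Permutation_sym ?.
Qed.
Lemma steq_trans t1 t2 t3 : steq D t1 t2 -> steq D t2 t3 -> steq D t1 t3.
Proof.
case: t1 t2 t3 => [F F' f S|G g|G g] [F2 F2' f2 S2|G2 g2|G2 g2] [F3 F3' f3 S3|G3 g3|G3 g3] //=.
- case=> ? ? ? HS [? ? ? HS']; split;
    [apply: lrel_trans|apply: lrel_trans|apply: Permutation_trans
    |exact: Forall2_trans direl_trans HS HS']; eauto.
- by case=> ? ? [? ?]; split; [apply: lrel_trans|apply: Permutation_trans]; eauto.
- by case=> ? ? [? ?]; split; [apply: lrel_trans|apply: Permutation_trans]; eauto.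
Qed.

Section InjectiveRenaming.
Variable g : NS -> nat -> nat.
Hypothesis g_inj : forall s, injective (g s).

Lemma aeq_homo_ren t u : aeq t u -> aeq (ren g t) (ren g u).
Proof. exact: (aeq_ren D g_inj t u).2. Qed.

Lemma lrel_ren l1 l2 : lrel D l1 l2 -> lrel D (lren g l1) (lren g l2).
Proof. exact/mrel_map/aeq_homo_ren. Qed.
Lemma pair_rel_ren K (p q : K * term) : pair_rel p q -> pair_rel (pair_ren g p) (pair_ren g q).
Proof. by case=> E /aeq_homo_ren; split. Qed.
Lemma patrel_ren P1 P2 : patrel D P1 P2 -> patrel D (pren g P1) (pren g P2).
Proof. by case=> *; split; [exact: lrel_ren..|exact: mrel_map (@pair_rel_ren _) _]. Qed.
Lemma condrel_ren c1 c2 : condrel D c1 c2 -> condrel D (cren g c1) (cren g c2).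
Proof.
elim: c1 c2 => [|B|c IH|a IHa b IHb|P c IH] [|B2|c2|a2 b2|P2 c2] //=.
- exact: aeq_homo_ren.
- exact: IH.
- by case=> /IHa ? /IHb ?.
- by case=> /patrel_ren ? /IH ?.
Qed.
Lemma dmlrel_ren q1 q2 : dmlrel D q1 q2 -> dmlrel D (qren g q1) (qren g q2).
Proof.
elim: q1 q2 => [||B|a IHa b IHb|c q IH|P q IH] [||B2|a2 b2|c2 q2|P2 q2] //=.
- exact: aeq_homo_ren.
- by case=> /IHa ? /IHb ?.
- by case=> /condrel_ren ? /IH ?.
- by case=> /patrel_ren ? /IH ?.
Qed.
Lemma envrel_ren e1 e2 : envrel D e1 e2 -> envrel D (eren g e1) (eren g e2).
Proof. exact/Forall2_map/pair_rel_ren. Qed.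
Lemma cirel_ren c1 c2 : cirel D c1 c2 -> cirel D (ciren g c1) (ciren g c2).
Proof.
case: c1 c2 => [e p|B||e p|H e P p] [e' p'|B'||e' p'|H' e' P' p'] //=.
- by case=> /envrel_ren ? /condrel_ren ?.
- exact: aeq_homo_ren.
- by case=> /envrel_ren ? /condrel_ren ?.
- by case=> /lrel_ren ? /envrel_ren ? /patrel_ren ? /condrel_ren ?.
Qed.
Lemma direl_ren d1 d2 : direl D d1 d2 -> direl D (diren g d1) (diren g d2).
Proof.
case: d1 d2 => [e R||e R|e cs R|H e B F0 P R] [e' R'||e' R'|e' cs' R'|H' e' B' F0' P' R'] //=.
- by case=> /envrel_ren ? /dmlrel_ren ?.
- by case=> /envrel_ren ? /dmlrel_ren ?.
- by case=> /envrel_ren ? /(Forall2_map cirel_ren) ? /dmlrel_ren ?.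
- case=> /lrel_ren ? /envrel_ren ? -> HF [/patrel_ren ? /dmlrel_ren ?]; split=> //.
  by case: F0 F0' HF => [l|] [l'|] //=; exact: lrel_ren.
Qed.
Lemma steq_ren t1 t2 : steq D t1 t2 -> steq D (sren g t1) (sren g t2).
Proof.
case: t1 t2 => [F F' f S|G g'|G g'] [F2 F2' f2 S2|G2 g2|G2 g2] //=.
- case=> /lrel_ren ? /lrel_ren ? /(Permutation_map (ren_nom g)) ?.
  by move/(Forall2_map direl_ren).
- by case=> /lrel_ren ? /(Permutation_map (ren_nom g)) ?.
- by case=> /lrel_ren ? /(Permutation_map (ren_nom g)) ?.
Qed.

End InjectiveRenaming.

Lemma lrel_noms l1 l2 : lrel D l1 l2 -> lnoms l1 =i lnoms l2.
Proof. exact/mrel_flatten_mem/aeq_noms. Qed.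
Lemma pair_rel_noms K (p q : K * term) : pair_rel p q -> tnoms p.2 =i tnoms q.2.
Proof. by case=> _ /aeq_noms. Qed.
Lemma patrel_noms P1 P2 : patrel D P1 P2 -> pnoms P1 =i pnoms P2.
Proof.
case=> /lrel_noms H1 /lrel_noms H2 /lrel_noms H3 /(mrel_flatten_mem (@pair_rel_noms _)) H4.
by do 3!(apply: eq_mem_cat => //).
Qed.
Lemma condrel_noms c1 c2 : condrel D c1 c2 -> cnoms c1 =i cnoms c2.
Proof.
elim: c1 c2 => [|B|c IH|a IHa b IHb|P c IH] [|B2|c2|a2 b2|P2 c2] //=.
- exact: aeq_noms.
- exact: IH.
- by case=> /IHa H1 /IHb H2; exact: eq_mem_cat.
- by case=> /patrel_noms H1 /IH H2; exact: eq_mem_cat.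
Qed.
Lemma dmlrel_noms q1 q2 : dmlrel D q1 q2 -> qnoms q1 =i qnoms q2.
Proof.
elim: q1 q2 => [||B|a IHa b IHb|c q IH|P q IH] [||B2|a2 b2|c2 q2|P2 q2] //=.
- exact: aeq_noms.
- by case=> /IHa H1 /IHb H2; exact: eq_mem_cat.
- by case=> /condrel_noms H1 /IH H2; exact: eq_mem_cat.
- by case=> /patrel_noms H1 /IH H2; exact: eq_mem_cat.
Qed.
Lemma envrel_noms e1 e2 : envrel D e1 e2 -> enoms e1 =i enoms e2.
Proof. exact/Forall2_flatten_mem/pair_rel_noms. Qed.
Lemma cirel_noms c1 c2 : cirel D c1 c2 -> cinoms c1 =i cinoms c2.
Proof.
case: c1 c2 => [e p|B||e p|H e P p] [e' p'|B'||e' p'|H' e' P' p'] //=.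
- by case=> /envrel_noms H1 /condrel_noms H2; exact: eq_mem_cat.
- exact: aeq_noms.
- by case=> /envrel_noms H1 /condrel_noms H2; exact: eq_mem_cat.
- case=> /lrel_noms H0 /envrel_noms H1 /patrel_noms H2 /condrel_noms H3.
  by do 3!(apply: eq_mem_cat => //).
Qed.
Lemma direl_noms d1 d2 : direl D d1 d2 -> dinoms d1 =i dinoms d2.
Proof.
case: d1 d2 => [e R||e R|e cs R|H e B F0 P R] [e' R'||e' R'|e' cs' R'|H' e' B' F0' P' R'] //=.
- by case=> /envrel_noms H1 /dmlrel_noms H2; exact: eq_mem_cat.
- by case=> /envrel_noms H1 /dmlrel_noms H2; exact: eq_mem_cat.
- case=> /envrel_noms H1 /(Forall2_flatten_mem cirel_noms) H /dmlrel_noms H2.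
  by do 2!(apply: eq_mem_cat => //).
- case=> /lrel_noms H0 /envrel_noms H1 _ HF [/patrel_noms H2 /dmlrel_noms H3].
  have HF0 : (if F0 is Some l then lnoms l else [::]) =i
             (if F0' is Some l then lnoms l else [::]).
    by case: F0 F0' HF => [l|] [l'|] //= /lrel_noms.
  by do 4!(apply: eq_mem_cat => //).
Qed.
Lemma steq_noms t1 t2 : steq D t1 t2 -> snoms t1 =i snoms t2.
Proof.
rewrite /snoms; case: t1 t2 => [F F' f S|G g|G g] [F2 F2' f2 S2|G2 g2|G2 g2] //=.
- case=> /lrel_noms H1 /lrel_noms H2 /Permutation_mem H3.
  by move/(Forall2_flatten_mem direl_noms) => H; do 3!(apply: eq_mem_cat => //).
- by case=> /lrel_noms H1 /Permutation_mem H2; exact: eq_mem_cat.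
- by case=> /lrel_noms H1 /Permutation_mem H2; exact: eq_mem_cat.
Qed.

Lemma steq_ffacts t1 t2 : steq D t1 t2 -> Permutation (ffacts t1) (ffacts t2).
Proof. by case: t1 t2 => [? ? ? ?|? ?|? ?] [? ? ? ?|? ?|? ?] //= => [[]|[]|[]]. Qed.

End StructuralEquality.

Section PartialInjections.
Variable NS : eqType.
Implicit Types (X : seq (NS * nat)) (f : NS -> nat -> nat).

Definition inj_on X f :=
  forall s n m, (s, n) \in X -> (s, m) \in X -> f s n = f s m -> n = m.

Lemma inj_on_extend X f : inj_on X f ->
  exists g : NS -> nat -> nat, (forall s, injective (g s)) /\ agree g f X.
Proof.
move=> f_inj; pose M := (\max_(p <- X) f p.1 p.2).+1.
have ltM s n : (s, n) \in X -> f s n < M.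
  by move=> Hn; rewrite ltnS; exact: (@leq_bigmax_seq _ X xpredT (fun p => f p.1 p.2) (s, n)).
exists (fun s n => if (s, n) \in X then f s n else n + M); split; last by move=> -[s n] /= ->.
move=> s n m /=; case: ifP => Hn; case: ifP => Hm.
- exact: f_inj.
- by move=> E; have := ltM _ _ Hn; rewrite E ltnNge leq_addl.
- by move=> E; have := ltM _ _ Hm; rewrite -E ltnNge leq_addl.
- by move/eqP; rewrite eqn_add2r => /eqP.
Qed.

Lemma inj_on_left_inverse X f : inj_on X f ->
  exists h : NS -> nat -> nat,
    (forall s, injective (h s)) /\ forall s n, (s, n) \in X -> h s (f s n) = n.
Proof.
move=> f_inj; pose preimage s k := [seq p <- X | (p.1 == s) && (f s p.2 == k)].
pose h0 s k := head k (map snd (preimage s k)).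
have h0K s n : (s, n) \in X -> h0 s (f s n) = n.
  move=> Hn; have : (s, n) \in preimage s (f s n) by rewrite mem_filter /= !eqxx.
  rewrite /h0; case E: (preimage s (f s n)) => [|[s' m] L] //= _.
  have : (s', m) \in preimage s (f s n) by rewrite E mem_head.
  by rewrite mem_filter => /andP [/andP [/eqP /= Es /eqP Hf] Hm]; subst s'; exact: f_inj Hm Hn Hf.
have [h [h_inj Hh]] : exists h : NS -> nat -> nat,
    (forall s, injective (h s)) /\ agree h h0 (map (ren_nom f) X).
  apply: inj_on_extend => s k1 k2 /mapP [[s1 n1] H1 [E1 E1']] /mapP [[s2 n2] H2 [E2 E2']].
  by subst; rewrite !h0K // => ->.
exists h; split=> // s n Hn.
by rewrite (Hh (s, f s n)) ?h0K //; exact: (map_f (ren_nom f) Hn).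
Qed.

Lemma inj_on_succ_extend X (Y : seq (NS * nat)) (a : NS -> nat -> nat) :
  inj_on X a -> {subset Y <= X} ->
  (forall s m, (s, m) \in Y -> (s, m.+1) \notin X) ->
  (forall s m n, (s, m) \in Y -> (s, n) \in X -> a s n <= a s m) ->
  exists g : NS -> nat -> nat, [/\ forall s, injective (g s), agree g a X &
    forall s m, (s, m) \in Y -> g s m.+1 = (g s m).+1].
Proof.
move=> a_inj YX Ysucc Ymax; pose succ (p : NS * nat) := (p.1, p.2.+1).
(* Off X only the successors m.+1 of m in Y matter; they go to (a s m).+1, which
   [Ymax] puts above every value of [a] on X at sort s. *)
pose f s n := if (s, n) \in X then a s n else (a s n.-1).+1.
have memXY s n : (s, n) \in X ++ map succ Y ->
    (s, n) \in X \/ exists2 m, (s, m) \in Y & n = m.+1.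
  by rewrite mem_cat => /orP [|/mapP [[s' m] Hm [-> ->]]]; [left | right; exists m].
have f_inj : inj_on (X ++ map succ Y) f.
  move=> s n m /memXY [Hn|[n' Hn' ->]] /memXY [Hm|[m' Hm' ->]]; rewrite /f.
  - by rewrite Hn Hm; exact: a_inj.
  - by rewrite Hn (negbTE (Ysucc _ _ Hm')) => E; have := Ymax _ _ _ Hm' Hn; rewrite E ltnn.
  - by rewrite Hm (negbTE (Ysucc _ _ Hn')) => E; have := Ymax _ _ _ Hn' Hm; rewrite -E ltnn.
  - rewrite (negbTE (Ysucc _ _ Hn')) (negbTE (Ysucc _ _ Hm')) => -[E].
    by rewrite (a_inj _ _ _ (YX _ Hn') (YX _ Hm') E).
have [g [g_inj gf]] := inj_on_extend f_inj.
exists g; split=> // [[s n] Hn|s m Hm].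
  by rewrite (gf (s, n)) /f /= ?Hn // mem_cat Hn.
have HmX : (s, m) \in X := YX _ Hm.
rewrite (gf (s, m.+1)) ?(gf (s, m)) ?mem_cat ?HmX // /f /= ?HmX (negbTE (Ysucc _ _ Hm)) //.
by rewrite (map_f succ Hm) orbT.
Qed.

End PartialInjections.

Section NominalEquivalence.
Variables (NS : eqType) (Fs : Type) (D : data_algebra NS Fs).
Implicit Types t : state NS Fs.

Lemma nom_equivE t1 t2 :
  nom_equiv D t1 t2 <-> exists2 a, inj_on (snoms t1) a & steq D (sren a t1) t2.
Proof.
split=> [[a [Ha _ _ Hs]]|[a Ha Hs]]; first by exists a.
exists a; split=> // s.
- by move=> n Hn; rewrite -(steq_noms Hs) snoms_ren; exact: (map_f (ren_nom a) Hn).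
- move=> k; rewrite -(steq_noms Hs) snoms_ren => /mapP [[s' n] Hn [-> ->]].
  by exists n.
Qed.

Lemma nom_equiv_refl t : nom_equiv D t t.
Proof. by apply/nom_equivE; exists id_ren; rewrite ?sren_id //; exact: steq_refl. Qed.

Lemma nom_equiv_sym t1 t2 : nom_equiv D t1 t2 -> nom_equiv D t2 t1.
Proof.
case/nom_equivE=> a Ha Hs; have [h [h_inj haK]] := inj_on_left_inverse Ha.
apply/nom_equivE; exists h => [s n m _ _|]; first exact: h_inj.
apply: steq_sym; have := steq_ren h_inj Hs.
by rewrite sren_comp (@sren_ext _ _ _ id_ren) ?sren_id // => -[s n] /haK.
Qed.

Lemma nom_equiv_trans t1 t2 t3 :
  nom_equiv D t1 t2 -> nom_equiv D t2 t3 -> nom_equiv D t1 t3.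
Proof.
case/nom_equivE=> a1 Ha1 Hs1 /nom_equivE [a2 Ha2 Hs2].
have [b [b_inj Hba2]] := inj_on_extend Ha2.
apply/nom_equivE; exists (comp_ren b a1) => [s n m Hn Hm /b_inj|]; first exact: Ha1.
by apply: steq_trans Hs2; rewrite -sren_comp -(sren_ext Hba2); exact: steq_ren.
Qed.

End NominalEquivalence.


(* [matches_ex] and [matches_from] are the instances [sel P = P_! o P_?] and
   [sel P = P_! o P_? o P_0]. *)
Definition matches_sel (NS : eqType) (Fs : Type) (D : data_algebra NS Fs)
    (sel : pattern NS Fs -> seq (term NS Fs)) H (e : env NS Fs) P :=
  exists b H', bground e P b /\ meq D H (H' ++ inst (extend e P b) (sel P)).

Section StepRenaming.
Variables (NS : eqType) (Fs : Type) (D : data_algebra NS Fs).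
Local Notation term := (term NS Fs).
Variable g : NS -> nat -> nat.
Hypothesis g_inj : forall s, injective (g s).

Lemma deq_homo_ren (t u : term) : deq D t u -> deq D (ren g t) (ren g u).
Proof. exact: (deq_ren D g_inj t u).2. Qed.

Lemma meq_ren l1 l2 : meq D l1 l2 -> meq D (lren g l1) (lren g l2).
Proof. exact/mrel_map/deq_homo_ren. Qed.

Lemma lookup_eren (e : env NS Fs) x : lookup (eren g e) x = ren g (lookup e x).
Proof. by elim: e => //= -[k t] e IH; case: ifP. Qed.

Lemma subst_eren (e : env NS Fs) t :
  subst (lookup (eren g e)) (ren g t) = ren g (subst (lookup e) t).
Proof. by symmetry; apply: ren_subst => x; rewrite lookup_eren. Qed.

Lemma inst_ren (e : env NS Fs) l : lren g (inst e l) = inst (eren g e) (lren g l).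
Proof. by rewrite /inst /lren -!map_comp; apply: eq_map => t /=; rewrite subst_eren. Qed.

Lemma pvars_ren (P : pattern NS Fs) : pvars (pren g P) = pvars P.
Proof.
case: P => ? ? ? ?; rewrite /pvars /pren /= /lren -!map_cat -!map_comp.
by congr (flatten _ ++ flatten _); apply: eq_map => t /=; rewrite tvars_ren.
Qed.

Lemma newvars_ren (P : pattern NS Fs) e : newvars (pren g P) (eren g e) = newvars P e.
Proof. by rewrite /newvars pvars_ren /eren -map_comp. Qed.

Lemma extend_ren (e : env NS Fs) P b :
  eren g (extend e P b) = extend (eren g e) (pren g P) (fun w => ren g (b w)).
Proof. by rewrite /extend newvars_ren /eren map_cat -map_comp. Qed.

Lemma bground_ren (e : env NS Fs) P b :
  bground (eren g e) (pren g P) (fun w => ren g (b w)) = bground e P b.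
Proof. by rewrite /bground newvars_ren; apply: eq_all => w; rewrite /ground tvars_ren. Qed.

Lemma fmatch_ren (e : env NS Fs) Ps fs :
  fmatch D e Ps fs -> fmatch D (eren g e) (pairs_ren g Ps) (fren g fs).
Proof.
case=> H1 H2; split; first by rewrite /fren /pairs_ren -!map_comp.
by apply: Forall2_map H2 => p q /= /deq_homo_ren; rewrite subst_eren.
Qed.

Lemma upsilon_fren (fs : seq (NS * nat)) :
  (forall p, p \in fs -> g p.1 p.2.+1 = (g p.1 p.2).+1) ->
  fren g (upsilon fs) = upsilon (fren g fs).
Proof.
by move=> Hg; rewrite /fren /upsilon -!map_comp; apply/eq_in_map => -[s n] /Hg /= ->.
Qed.

Lemma matches_sel_ren (sel : pattern NS Fs -> seq term) H e P :
  (forall P, sel (pren g P) = lren g (sel P)) ->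
  matches_sel D sel H e P -> matches_sel D sel (lren g H) (eren g e) (pren g P).
Proof.
move=> Hsel [b [H' [Hb Hm]]]; exists (fun w => ren g (b w)), (lren g H').
by rewrite bground_ren Hsel -extend_ren -inst_ren -map_cat; split=> //; exact: meq_ren.
Qed.

End StepRenaming.

Lemma ren_left_inverse (NS : eqType) (g : NS -> nat -> nat) (X : seq (NS * nat)) :
  (forall s, injective (g s)) ->
  exists h, (forall s, injective (h s)) /\ agree (comp_ren h g) id_ren X.
Proof.
move=> g_inj; have [|h [h_inj hK]] := @inj_on_left_inverse _ X g.
  by move=> s n m _ _; exact: g_inj.
by exists h; split=> // -[s n] /hK.
Qed.

Lemma matches_sel_renE (NS : eqType) (Fs : Type) (D : data_algebra NS Fs) g
    (sel : pattern NS Fs -> seq (term NS Fs)) H e P :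
  (forall s, injective (g s)) -> (forall a P, sel (pren a P) = lren a (sel P)) ->
  matches_sel D sel (lren g H) (eren g e) (pren g P) <-> matches_sel D sel H e P.
Proof.
move=> g_inj Hsel; split; last exact: matches_sel_ren.
have [h [h_inj /agree_cat [HH /agree_cat [He HP]]]] :=
  ren_left_inverse (lnoms H ++ enoms e ++ pnoms P) g_inj.
move/(matches_sel_ren h_inj (Hsel h)); rewrite lren_comp eren_comp pren_comp.
by rewrite (lren_ext HH) (eren_ext He) (pren_ext HP) lren_id eren_id pren_id.
Qed.

Section RulesCommuteWithRenaming.
Variables (NS : eqType) (Fs : Type) (D : data_algebra NS Fs).
Variable g : NS -> nat -> nat.
Hypothesis g_inj : forall s, injective (g s).

Lemma matches_ex_renE H e P :
  matches_ex D (lren g H) (eren g e) (pren g P) <-> matches_ex D H e P.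
Proof.
apply: (@matches_sel_renE _ _ D g (fun Q => p_bang Q ++ p_q Q)) => // a Q.
by rewrite /lren map_cat.
Qed.

Lemma matches_from_renE H e P :
  matches_from D (lren g H) (eren g e) (pren g P) <-> matches_from D H e P.
Proof.
apply: (@matches_sel_renE _ _ D g (fun Q => p_bang Q ++ p_q Q ++ p_0 Q)) => // a Q.
by rewrite /lren !map_cat.
Qed.

Lemma cstep_ren F cs cs' :
  cstep D F cs cs' -> cstep D (lren g F) (map (ciren g) cs) (map (ciren g) cs').
Proof.
case=> [Sk e|Sk e B|Sk e psi|Sk B|Sk e psi1 psi2|Sk e psi B HB|Sk e psi B HB|Sk e P psi
       |Sk H e P psi b H'' Hb Hm|Sk H e P psi B HB|Sk H e P psi B HB|Sk H e P psi Hn];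
  rewrite ?map_rcons ?map_cat /=.
- exact: CS_False.
- by rewrite -subst_eren; exact: CS_Bool.
- exact: CS_Neg.
- exact: CS_Not.
- exact: CS_Or.
- exact/CS_OrTrue/(deq_homo_ren g_inj HB).
- exact/CS_OrFalse/(deq_homo_ren g_inj HB).
- exact: CS_ExInit.
- rewrite lren_cat inst_ren extend_ren; apply: CS_ExMatch; first by rewrite bground_ren.
  by have := meq_ren g_inj Hm; rewrite !lren_cat inst_ren extend_ren lren_cat.
- exact/CS_ExFalse/(deq_homo_ren g_inj HB).
- exact/CS_ExTrue/(deq_homo_ren g_inj HB).
- by apply: CS_ExNoMatch; rewrite matches_ex_renE.
Qed.

Lemma dstep_ren t t' :
  (forall s m, (s, m) \in ffacts t -> g s m.+1 = (g s m).+1) ->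
  dstep D t t' -> dstep D (sren g t) (sren g t').
Proof.
move=> g_succ H; case: H g_succ => [F F' fF Sk|F F' fF Sk e|F F' fF Sk e|F F' fF Sk e f
  |F F' fF Sk e R1 R2|F F' fF Sk e R2|F F' fF Sk e R2|F F' fF Sk e phi R
  |F F' fF Sk e B R HB|F F' fF Sk e B R HB|F F' fF Sk e cs cs' R Hc|F F' fF Sk e P R
  |F F' fF Sk H e B P R b G H' K fs Hb HF HH Hp Hm|F F' fF Sk H e B F0 P R
  |F F' fF Sk H e B F0 P R|F F' fF Sk H e B P R Hn|F F' fF|F F' fF] g_succ /=;
  rewrite ?map_rcons ?map_cat /=.
- exact: DS_OkOk.
- exact: DS_Ok.
- exact: DS_Empty.
- by rewrite /lren map_rcons -subst_eren; exact: DS_Fact.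
- exact: DS_Plus.
- exact: DS_PlusOk.
- exact: DS_PlusTop.
- exact: DS_Imp.
- exact/DS_CondFalse/(deq_homo_ren g_inj HB).
- exact/DS_CondTrue/(deq_homo_ren g_inj HB).
- exact/DS_Cond/cstep_ren.
- exact: DS_FromInit.
- have fs_succ p : p \in fs -> g p.1 p.2.+1 = (g p.1 p.2).+1.
    by case: p => s m Hin; apply: g_succ; rewrite (Permutation_mem Hp) mem_cat Hin orbT.
  have -> : fren g (K ++ upsilon fs) = fren g K ++ upsilon (fren g fs).
    by rewrite -(upsilon_fren fs_succ); exact: map_cat.
  rewrite !lren_cat !inst_ren extend_ren !lren_cat; apply: DS_FromMatch.
  + by rewrite bground_ren.
  + by have := meq_ren g_inj HF; rewrite !lren_cat inst_ren extend_ren !lren_cat.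
  + by have := meq_ren g_inj HH; rewrite !lren_cat inst_ren extend_ren !lren_cat.
  + by have := Permutation_map (ren_nom g) Hp; rewrite /fren -map_cat.
  + by have := fmatch_ren g_inj Hm; rewrite extend_ren.
- by rewrite !lren_cat; exact: DS_FromRestore.
- exact: DS_FromOk.
- by rewrite fun_if map_rcons; apply: DS_FromNoMatch; rewrite matches_from_renE.
- by rewrite lren_cat; exact: DS_New.
- by rewrite lren_cat; exact: DS_Fail.
Qed.

End RulesCommuteWithRenaming.

Section RulesRespectStructuralEquality.
Variables (NS : eqType) (Fs : Type) (D : data_algebra NS Fs).
Local Notation term := (term NS Fs).
Local Notation aeq := (aeq D).

Lemma lookup_rel (e1 e2 : env NS Fs) x : envrel D e1 e2 -> aeq (lookup e1 x) (lookup e2 x).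
Proof. by elim=> [|p q l1 l2 [E1 E] _ IH] /=; [exact: aeq_refl | rewrite E1; case: ifP]. Qed.

Lemma subst_rel (e1 e2 : env NS Fs) t u : envrel D e1 e2 -> aeq t u ->
  aeq (subst (lookup e1) t) (subst (lookup e2) u).
Proof.
move=> He /(aeq_subst (lookup e1)) Htu; apply: aeq_trans Htu _.
elim/term_nested_ind: u => //= [x|s n|f ts H]; [exact: lookup_rel|exact: aeq_refl|].
by apply: aeq_op; elim: H => //= x l Hx _ IH; constructor.
Qed.

Lemma inst_rel (e1 e2 : env NS Fs) l1 l2 : envrel D e1 e2 -> lrel D l1 l2 ->
  lrel D (inst e1 l1) (inst e2 l2).
Proof. by move=> He; apply: mrel_map => t u; exact: subst_rel. Qed.

Lemma newvars_rel (e1 e2 : env NS Fs) P1 P2 : envrel D e1 e2 -> patrel D P1 P2 ->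
  newvars P1 e1 = newvars P2 e2.
Proof.
move=> He [H1 H2 H3 H4]; rewrite /newvars.
have -> : map fst e1 = map fst e2 by elim: He => //= p q l1 l2 [-> _] _ ->.
have Hv : pvars P1 =i pvars P2.
  apply: eq_mem_cat.
    by apply: mrel_flatten_mem (mrel_cat H1 (mrel_cat H2 H3)); exact: aeq_vars.
  by apply: mrel_flatten_mem H4 => p q [_ /aeq_vars].
apply/perm_sortP; [exact: leq_total|exact: leq_trans|exact: anti_leq|].
by apply: uniq_perm; rewrite ?undup_uniq // => x; rewrite !mem_undup !mem_filter Hv.
Qed.

Lemma extend_rel (e1 e2 : env NS Fs) P1 P2 b : envrel D e1 e2 -> patrel D P1 P2 ->
  envrel D (extend e1 P1 b) (extend e2 P2 b).
Proof.
move=> He Hp; rewrite /extend (newvars_rel He Hp); apply: List.Forall2_app => //.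
exact/Forall2_reflexive/pair_rel_refl.
Qed.

Lemma bground_rel (e1 e2 : env NS Fs) P1 P2 b : envrel D e1 e2 -> patrel D P1 P2 ->
  bground e1 P1 b = bground e2 P2 b.
Proof. by move=> He Hp; rewrite /bground (newvars_rel He Hp). Qed.

Lemma meq_sym l1 l2 : meq D l1 l2 -> meq D l2 l1.
Proof. exact/mrel_sym/deq_sym. Qed.
Lemma meq_trans l1 l2 l3 : meq D l1 l2 -> meq D l2 l3 -> meq D l1 l3.
Proof. exact/mrel_trans/deq_trans. Qed.
Lemma meq_lrel l1 l2 : lrel D l1 l2 -> meq D l1 l2.
Proof. exact/mrel_impl/aeq_deq. Qed.

Lemma meq_cat_rel H1 H2 H' I1 I2 : lrel D H1 H2 -> lrel D I1 I2 ->
  meq D H1 (H' ++ I1) -> meq D H2 (H' ++ I2).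
Proof.
move=> /meq_lrel/meq_sym HH /meq_lrel HI Hm; apply: meq_trans HH (meq_trans Hm _).
by apply: mrel_cat HI; apply/mrel_refl/deq_refl.
Qed.

Lemma deq_aeql B1 B2 c : aeq B1 B2 -> deq D B1 c -> deq D B2 c.
Proof. by move=> /aeq_sym/aeq_deq H1; exact: deq_trans. Qed.

Lemma matches_sel_rel (sel : pattern NS Fs -> seq term) H1 H2 e1 e2 P1 P2 :
  (forall P1 P2, patrel D P1 P2 -> lrel D (sel P1) (sel P2)) ->
  lrel D H1 H2 -> envrel D e1 e2 -> patrel D P1 P2 ->
  matches_sel D sel H1 e1 P1 -> matches_sel D sel H2 e2 P2.
Proof.
move=> Hsel HH He Hp [b [H' [Hb Hm]]]; exists b, H'; rewrite -(bground_rel b He Hp).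
by split=> //; apply: meq_cat_rel HH _ Hm; exact: inst_rel (extend_rel b He Hp) (Hsel _ _ Hp).
Qed.

Lemma matches_ex_rel H1 H2 e1 e2 P1 P2 :
  lrel D H1 H2 -> envrel D e1 e2 -> patrel D P1 P2 ->
  matches_ex D H1 e1 P1 -> matches_ex D H2 e2 P2.
Proof.
by apply: (@matches_sel_rel (fun P => p_bang P ++ p_q P)) => ? ? [? ? _ _]; exact: mrel_cat.
Qed.

Lemma matches_from_rel H1 H2 e1 e2 P1 P2 :
  lrel D H1 H2 -> envrel D e1 e2 -> patrel D P1 P2 ->
  matches_from D H1 e1 P1 -> matches_from D H2 e2 P2.
Proof.
apply: (@matches_sel_rel (fun P => p_bang P ++ p_q P ++ p_0 P)) => ? ? [? ? ? _].
by do 2!(apply: mrel_cat => //).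
Qed.

Definition fact_match (e : env NS Fs) (p : NS * term) (q : NS * nat) :=
  p.1 = q.1 /\ deq D (subst (lookup e) p.2) (TNom q.1 q.2).

Lemma fmatchE e Ps fs : fmatch D e Ps fs <-> List.Forall2 (fact_match e) Ps fs.
Proof.
split=> [[]|].
- move=> + H; elim: H => // p q l1 l2 Hpq _ IH /= [E1 /IH].
  by constructor.
- by elim=> // p q l1 l2 [E1 E2] _ [IH1 IH2]; split; [rewrite /= E1 IH1 | constructor].
Qed.

Lemma fmatch_rel (e1 e2 : env NS Fs) P1 P2 b fs : envrel D e1 e2 -> patrel D P1 P2 ->
  fmatch D (extend e1 P1 b) (p_star P1) fs ->
  exists2 fs2, Permutation fs fs2 & fmatch D (extend e2 P2 b) (p_star P2) fs2.
Proof.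
move=> He Hp /fmatchE Hf; have He' := extend_rel b He Hp.
case: Hp => _ _ _ [l Hl /(Forall2_sym (@pair_rel_sym _ _ D _)) Hkl].
have Hlfs : List.Forall2 (fact_match (extend e2 P2 b)) l fs.
  apply: Forall2_trans Hkl Hf => x y z [E1 E2] [E3 E4]; split; first by rewrite E1.
  by apply: deq_aeql E4; apply: subst_rel He' (aeq_sym E2).
have [fs2 [Hp2 Hf2]] := Permutation_Forall2 (Permutation_sym Hl) Hlfs.
by exists fs2 => //; apply/fmatchE.
Qed.

(* Case on the top item(s) of a stack related to [rcons Sk x] or [Sk ++ [:: x; z]]; the
   other hypotheses stay anonymous and are consumed by [done]. *)
Local Ltac invert_top :=
  move=> /Forall2_rcons_inv[? [? [-> ? +]]];
  lazymatch goal with |- _ ?y -> _ => case: y => //= end.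
Local Ltac invert_top2 :=
  move=> /Forall2_cat2_inv[? [? [? [-> ? + +]]]];
  lazymatch goal with |- _ ?y -> _ ?w -> _ => case: w => //=; case: y => //= end.

Lemma cstep_rel F F2 cs cs2 cs' : lrel D F F2 -> List.Forall2 (cirel D) cs cs2 ->
  cstep D F cs cs' -> exists2 cs2', cstep D F2 cs2 cs2' & List.Forall2 (cirel D) cs' cs2'.
Proof.
move=> HF Hcs Hst; case: Hst Hcs =>
  [Sk e|Sk e B|Sk e psi|Sk B|Sk e psi1 psi2|Sk e psi B HB|Sk e psi B HB|Sk e P psi
  |Sk H e P psi b H'' Hb Hm|Sk H e P psi B HB|Sk H e P psi B HB|Sk H e P psi Hn].
- invert_top => e2 p2 [He]; case: p2 => // _.
  by eexists; [exact: CS_False | apply: Forall2_rcons => //; exact: aeq_refl].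
- invert_top => e2 p2 [He]; case: p2 => //= B2 HB.
  by eexists; [exact: CS_Bool | apply: Forall2_rcons => //; exact: subst_rel].
- invert_top => e2 p2 [He]; case: p2 => //= psi2 Hpsi.
  by eexists; [exact: CS_Neg | exact: Forall2_cat2].
- invert_top2 => B2 _ HB; eexists; first exact: CS_Not.
  by apply: Forall2_rcons => //; apply: aeq_op; repeat constructor.
- invert_top => e2 p2 [He]; case: p2 => //= a2 b2 [Ha Hb].
  by eexists; [exact: CS_Or | exact: Forall2_cat2].
- invert_top2 => e2 psi2 B2 Hy HB2; eexists; first exact/CS_OrTrue/(deq_aeql HB2 HB).
  by apply: Forall2_rcons => //; exact: aeq_refl.
- invert_top2 => e2 psi2 B2 Hy HB2.
  by eexists; [exact/CS_OrFalse/(deq_aeql HB2 HB) | exact: Forall2_rcons].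
- invert_top => e2 p2 [He]; case: p2 => //= P2 psi2 [HP Hpsi].
  by eexists; [exact: CS_ExInit | apply: Forall2_rcons => //; split].
- invert_top => H2 e2 P2 psi2 [HH He HP Hpsi].
  have He' := extend_rel b He HP; case: (HP) => HP1 HP2 _ _.
  eexists; first apply: (@CS_ExMatch _ _ _ _ _ _ _ _ _ b H'').
  + by rewrite -(bground_rel b He HP).
  + by apply: meq_cat_rel HH _ Hm; exact: inst_rel He' (mrel_cat HP1 HP2).
  + apply: Forall2_cat2 => //; split=> //.
    by apply: mrel_cat; [exact: lrel_refl | exact: inst_rel He' HP1].
- invert_top2 => H2 e2 P2 psi2 B2 Hy HB2.
  by eexists; [exact/CS_ExFalse/(deq_aeql HB2 HB) | exact: Forall2_rcons].
- invert_top2 => H2 e2 P2 psi2 B2 Hy HB2; eexists; first exact/CS_ExTrue/(deq_aeql HB2 HB).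
  by apply: Forall2_rcons => //; exact: aeq_refl.
- invert_top => H2 e2 P2 psi2 [HH He HP Hpsi].
  eexists; first apply/CS_ExNoMatch/(contra_not _ Hn).
    exact: matches_ex_rel (lrel_sym HH) (envrel_sym He) (patrel_sym HP).
  by apply: Forall2_rcons => //; exact: aeq_refl.
Qed.

Lemma from_match_steq F F' fF Sk H e B P R b G H' K fs F2 F2' fF2 S2 :
  bground e P b ->
  meq D F (G ++ inst (extend e P b) (p_bang P ++ p_q P ++ p_0 P)) ->
  meq D H (H' ++ inst (extend e P b) (p_bang P ++ p_q P ++ p_0 P)) ->
  Permutation fF (K ++ fs) -> fmatch D (extend e P b) (p_star P) fs ->
  lrel D F F2 -> lrel D F' F2' -> Permutation fF fF2 ->
  List.Forall2 (direl D) (rcons Sk (DIFrom H e B None P R)) S2 ->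
  exists2 u', dstep D (St F2 F2' fF2 S2) u' &
    steq D (St (G ++ inst (extend e P b) (p_bang P ++ p_q P)) F' (K ++ upsilon fs)
               (Sk ++ [:: DIFrom (H' ++ inst (extend e P b) (p_bang P)) e B
                            (Some (inst (extend e P b) (p_0 P))) P R;
                          DIFrame (extend e P b) R])) u'.
Proof.
move=> Hb HFm HHm Hperm Hm HF HF' Hp.
invert_top => H2 e2 B2 F02 P2 R2 [HH He <- + [HP HR]]; case: F02 => // _.
have He' := extend_rel b He HP; have [fs2 Hfs Hm2] := fmatch_rel He HP Hm.
case: (HP) => HP1 HP2 HP3 _; have HP123 := mrel_cat HP1 (mrel_cat HP2 HP3).
eexists; first apply: (@DS_FromMatch _ _ _ _ _ _ _ _ _ _ _ _ b G H' K fs2) => //.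
- by rewrite -(bground_rel b He HP).
- exact: meq_cat_rel HF (inst_rel He' HP123) HFm.
- exact: meq_cat_rel HH (inst_rel He' HP123) HHm.
- apply: Permutation_trans (Permutation_sym Hp) (Permutation_trans Hperm _).
  exact: Permutation_app_head.
split=> //.
- by apply: mrel_cat; [exact: lrel_refl | exact: inst_rel He' (mrel_cat HP1 HP2)].
- by apply: Permutation_app_head; rewrite /upsilon; exact: Permutation_map.
- apply: Forall2_cat2 => //=; split=> //; last exact: inst_rel He' HP3.
  by apply: mrel_cat; [exact: lrel_refl | exact: inst_rel He' HP1].
Qed.

Lemma dstep_steq t u t' :
  steq D t u -> dstep D t t' -> exists2 u', dstep D u u' & steq D t' u'.
Proof.
move=> Htu Hst; case: Hst u Htu => [F F' fF Sk|F F' fF Sk e|F F' fF Sk e|F F' fF Sk e f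
  |F F' fF Sk e Ra Rb|F F' fF Sk e Rb|F F' fF Sk e Rb|F F' fF Sk e phi R
  |F F' fF Sk e B R HB|F F' fF Sk e B R HB|F F' fF Sk e cs cs' R Hc|F F' fF Sk e P R
  |F F' fF Sk H e B P R b G H' K fs Hb HFm HHm Hperm Hm|F F' fF Sk H e B F0 P R
  |F F' fF Sk H e B F0 P R|F F' fF Sk H e B P R Hn|F F' fF|F F' fF]
  [F2 F2' fF2 S2|//|//] [HF HF' Hp] //=.
- invert_top2 => _ _.
  by eexists; [exact: DS_OkOk | split=> //; exact: Forall2_rcons].
- invert_top => e2 R2 [He]; case: R2 => // _.
  by eexists; [exact: DS_Ok | split=> //; exact: Forall2_rcons].
- invert_top => e2 R2 [He]; case: R2 => // _.
  by eexists; first exact: DS_Empty.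
- invert_top => e2 R2 [He]; case: R2 => //= f2 Hf; eexists; first exact: DS_Fact.
  by split=> //; [apply: lrel_rcons HF' _; exact: subst_rel | exact: Forall2_rcons].
- invert_top => e2 R2 [He]; case: R2 => //= a2 b2 [Ha Hb].
  by eexists; [exact: DS_Plus | split=> //; exact: Forall2_cat2].
- invert_top2 => e2 R2 [He HR] _.
  by eexists; [exact: DS_PlusOk | split=> //; exact: Forall2_cat2].
- invert_top => e2 R2 [He HR].
  by eexists; [exact: DS_PlusTop | split=> //; exact: Forall2_rcons].
- invert_top => e2 R2 [He]; case: R2 => //= phi2 R2 [Hphi HR].
  eexists; first exact: DS_Imp.
  by split=> //; apply: Forall2_rcons => //; split=> //; constructor.
- invert_top => e2 cs2 R2 [He /Forall2_seq1_inv[c -> + HR]]; case: c => //= B2 HB2.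
  by eexists; [exact/DS_CondFalse/(deq_aeql HB2 HB) | split].
- invert_top => e2 cs2 R2 [He /Forall2_seq1_inv[c -> + HR]]; case: c => //= B2 HB2.
  by eexists; [exact/DS_CondTrue/(deq_aeql HB2 HB) | split=> //; exact: Forall2_rcons].
- invert_top => e2 cs2 R2 [He Hcs HR]; have [cs2' Hst' Hcs'] := cstep_rel HF Hcs Hc.
  by eexists; [exact: DS_Cond Hst' | split=> //; exact: Forall2_rcons].
- invert_top => e2 R2 [He]; case: R2 => //= P2 R2 [HP HR].
  by eexists; [exact: DS_FromInit | split=> //; apply: Forall2_rcons => //; split].
- exact: from_match_steq Hb HFm HHm Hperm Hm HF HF' Hp.
- invert_top => H2 e2 B2 [l2|] P2 R2 [HH He <- Hl2 HPR] //.
  eexists; first exact: DS_FromRestore.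
  by split=> //; [exact: mrel_cat | apply: Forall2_rcons => //; split=> //; exact: mrel_cat].
- invert_top2 => H2 e2 B2 [l2|] P2 R2 [HH He <- Hl2 HPR] _ //.
  by eexists; [exact: DS_FromOk | split=> //; exact: Forall2_rcons].
- invert_top => H2 e2 B2 [l2|] P2 R2 [HH He <- _ [HP HR]] //.
  eexists; first apply/DS_FromNoMatch/(contra_not _ Hn).
    exact: matches_from_rel (lrel_sym HH) (envrel_sym He) (patrel_sym HP).
  by split=> //; case: (B) => //; exact: Forall2_rcons.
- case/Forall2_seq1_inv=> y ->; case: y => // _.
  by eexists; [exact: DS_New | split=> //; exact: mrel_cat].
- move/Forall2_nil_inv ->.
  by eexists; [exact: DS_Fail | split=> //; exact: mrel_cat].
Qed.

End RulesRespectStructuralEquality.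

Section Bisimulation.
Variables (NS : eqType) (Fs : Type) (D : data_algebra NS Fs).
Implicit Types t : state NS Fs.

Lemma fresh_state_max t s m k :
  fresh_state t -> (s, m) \in ffacts t -> (s, k) \in snoms t -> k <= m.
Proof.
move=> Ht Hm; rewrite /snoms mem_cat => /orP [Hk|Hk].
  by rewrite ltnW // (Ht _ Hm (s, k)) // mem_cat Hk.
have [[->] //|Hkm] := eqVneq (s, k) (s, m).
by rewrite ltnW // (Ht _ Hm (s, k)) // mem_cat (rem_mem Hkm) ?orbT.
Qed.

Lemma ffacts_snoms t : {subset ffacts t <= snoms t}.
Proof. by move=> p Hp; rewrite /snoms mem_cat Hp orbT. Qed.

Lemma fresh_ren_extend t1 t2 a :
  fresh_state t1 -> fresh_state t2 -> inj_on (snoms t1) a -> steq D (sren a t1) t2 ->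
  exists g : NS -> nat -> nat, [/\ forall s, injective (g s), agree g a (snoms t1) &
    forall s m, (s, m) \in ffacts t1 -> g s m.+1 = (g s m).+1].
Proof.
move=> fresh1 fresh2 a_inj Hs; apply: inj_on_succ_extend => // [|s m Hm|s m n Hm Hn].
- exact: ffacts_snoms.
- by apply/negP => /(fresh_state_max fresh1 Hm); rewrite ltnn.
- apply: (fresh_state_max fresh2 (s := s)).
    rewrite -(Permutation_mem (steq_ffacts Hs)).
    have -> : ffacts (sren a t1) = fren a (ffacts t1) by case: (t1).
    exact: (map_f (ren_nom a) Hm).
  by rewrite -(steq_noms Hs) snoms_ren; exact: (map_f (ren_nom a) Hn).
Qed.

Lemma nom_equiv_sim t1 t2 : fresh_state t1 -> fresh_state t2 -> nom_equiv D t1 t2 ->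
  forall t1', dstep D t1 t1' -> exists2 t2', dstep D t2 t2' & nom_equiv D t1' t2'.
Proof.
move=> fresh1 fresh2 /nom_equivE [a a_inj Hs] t1' Hst.
have [g [g_inj ga g_succ]] := fresh_ren_extend fresh1 fresh2 a_inj Hs.
have Hgs : steq D (sren g t1) t2 by rewrite (sren_ext ga).
have [t2' Hst2 Hs'] := dstep_steq Hgs (dstep_ren g_inj g_succ Hst).
by exists t2' => //; apply/nom_equivE; exists g => // s n m _ _ /g_inj.
Qed.

End Bisimulation.

Theorem lemma19 (NS : eqType) (Fs : Type) (D : data_algebra NS Fs) :
  [/\ (forall t : state NS Fs, nom_equiv D t t),
      (forall t1 t2 : state NS Fs, nom_equiv D t1 t2 -> nom_equiv D t2 t1),
      (forall t1 t2 t3 : state NS Fs,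
          nom_equiv D t1 t2 -> nom_equiv D t2 t3 -> nom_equiv D t1 t3) &
      (forall t1 t2 : state NS Fs,
          fresh_state t1 -> fresh_state t2 -> nom_equiv D t1 t2 ->
          (forall t1', dstep D t1 t1' ->
             exists2 t2', dstep D t2 t2' & nom_equiv D t1' t2') /\
          (forall t2', dstep D t2 t2' ->
             exists2 t1', dstep D t1 t1' & nom_equiv D t1' t2'))].
Proof.
split; [exact: nom_equiv_refl | exact: nom_equiv_sym | exact: nom_equiv_trans |].
move=> t1 t2 fresh1 fresh2 E; split; first exact: nom_equiv_sim.
move=> t2' /(nom_equiv_sim fresh2 fresh1 (nom_equiv_sym E)) [t1' Hst1 E'].
by exists t1' => //; exact: nom_equiv_sym.
Qed.
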